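(* Let $A=D(A)\oplus R(A)$ be an Abelian group, where $D(A)\neq 0$ is the divisible part and $R(A)\neq 0$ is the reduced part of $A$. Then $\mathrm{End}\,A$ is centrally essential if and only if $R(A)\cong\bigoplus_{p\in P'}Z_{p^{k_p}}$ (with positive integers $k_p$) and either $D(A)\cong Q$ or $D(A)\cong\bigoplus_{p\in P''}Z_{p^\infty}$, where $P'$ and $P''$ are sets of pairwise distinct primes with $P'\cap P''=\emptyset$.
   Context: All rings are associative with non-zero identity. A ring $R$ is centrally essential if for every non-zero $a\in R$ there exist non-zero elements $x,y$ of the center of $R$ with $ax=y$. $Q$ is the additive group of rationals, $Z_{p^k}$ the cyclic group of order $p^k$, $Z_{p^\infty}$ the quasi-cyclic $p$-group. Every Abelian group decomposes as the direct sum of its maximal divisible subgroup $D(A)$ and a reduced subgroup $R(A)$. *)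

From HB Require Import structures.
From mathcomp Require Import all_boot all_order all_algebra.
From mathcomp Require Import boolp classical_sets functions.
Set Implicit Arguments. Unset Strict Implicit. Unset Printing Implicit Defensive.
Import Order.TTheory GRing.Theory Num.Theory.
Local Open Scope ring_scope.

Definition is_subgroup (A : zmodType) (S : A -> Prop) : Prop :=
  S 0 /\ (forall x y, S x -> S y -> S (x - y)).

Definition nonzero_sub (A : zmodType) (S : A -> Prop) : Prop :=
  exists x, S x /\ x <> 0.

Definition divisible_sub (A : zmodType) (S : A -> Prop) : Prop :=
  is_subgroup S /\
  (forall x n, S x -> (0 < n)%N -> exists y, S y /\ y *+ n = x).

Definition is_divisible_part (A : zmodType) (S : A -> Prop) : Prop :=
  divisible_sub S /\ (forall T, divisible_sub T -> forall x, T x -> S x).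

Definition internal_dsum (A : zmodType) (S T : A -> Prop) : Prop :=
  is_subgroup S /\ is_subgroup T /\
  (forall x, S x -> T x -> x = 0) /\
  (forall a, exists s t, S s /\ T t /\ a = s + t).

Definition sub_isomorphic (A B : zmodType) (S : A -> Prop) (T : B -> Prop) : Prop :=
  exists f : A -> B,
    (forall x y, S x -> S y -> f (x + y) = f x + f y) /\
    (forall x, S x -> T (f x)) /\
    (forall x y, S x -> S y -> f x = f y -> x = y) /\
    (forall z, T z -> exists x, S x /\ f x = z).

(* Elements of End A are the additive maps A -> A (compared pointwise);     *)
(* the product is composition.                                               *)
Definition is_endo (A : zmodType) (f : A -> A) : Prop :=
  forall x y, f (x + y) = f x + f y.

Definition endo_nonzero (A : zmodType) (f : A -> A) : Prop := exists x, f x <> 0.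

Definition endo_central (A : zmodType) (f : A -> A) : Prop :=
  is_endo f /\ (forall g, is_endo g -> forall x, f (g x) = g (f x)).

Definition End_centrally_essential (A : zmodType) : Prop :=
  forall a : A -> A, is_endo a -> endo_nonzero a ->
    exists x y : A -> A,
      endo_central x /\ endo_central y /\ endo_nonzero x /\ endo_nonzero y /\
      (forall z, a (x z) = y z).

(* The group Q/Z, realised on the representatives in [0,1).                 *)
Definition frac (x : rat) : rat := x - (Num.floor x)%:~R.

Lemma frac_itv x : (0 <= frac x) && (frac x < 1).
Proof.
rewrite /frac subr_ge0 floor_le /= ltrBlDr addrC.
by rewrite -[1]/(1%:~R) -intrD floorD1_gt.
Qed.

Lemma fracDz x (z : int) : frac (x + z%:~R) = frac x.
Proof.
rewrite /frac floorDrz ?intr_int // intrKfloor intrD.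
by rewrite opprD addrACA subrr addr0.
Qed.

Lemma frac_id x : 0 <= x < 1 -> frac x = x.
Proof.
by move=> hx; rewrite /frac (@floor_def _ x 0) ?subr0 //.
Qed.

Lemma fracDl x y : frac (frac x + y) = frac (x + y).
Proof.
have -> : frac x + y = (x + y) + (- Num.floor x)%:~R by rewrite /frac intrN addrAC.
exact: fracDz.
Qed.

Record QZ := MkQZ { qzval : rat; _ : (0 <= qzval) && (qzval < 1) }.
HB.instance Definition _ := [isSub for qzval].
HB.instance Definition _ := [Choice of QZ by <:].

Definition qz_of (x : rat) : QZ := MkQZ (frac_itv x).
Definition qz0 : QZ := qz_of 0.
Definition qzopp (a : QZ) : QZ := qz_of (- qzval a).
Definition qzadd (a b : QZ) : QZ := qz_of (qzval a + qzval b).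

Lemma qzvalP (a : QZ) : 0 <= qzval a < 1.
Proof. by case: a. Qed.

Lemma qzaddA : associative qzadd.
Proof.
move=> a b c; apply: val_inj => /=.
rewrite fracDl [qzval a + _]addrC fracDl.
by rewrite [in LHS]addrC addrA.
Qed.

Lemma qzaddC : commutative qzadd.
Proof. by move=> a b; apply: val_inj => /=; rewrite addrC. Qed.

Lemma qzadd0 : left_id qz0 qzadd.
Proof. by move=> a; apply: val_inj => /=; rewrite fracDl add0r frac_id // qzvalP. Qed.

Lemma qzaddN : left_inverse qz0 qzopp qzadd.
Proof. by move=> a; apply: val_inj => /=; rewrite fracDl addNr. Qed.

HB.instance Definition _ := GRing.isZmodule.Build QZ qzaddA qzaddC qzadd0 qzaddN.

(* Z_{p^k}: the cyclic subgroup of Q/Z of order p^k, i.e. its p^k-torsion. *)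
Definition cyclic_QZ (n : nat) : QZ -> Prop := fun x => x *+ n = 0.

(* Z_{p^oo}: the p-primary component of Q/Z (quasi-cyclic p-group). *)
Definition prufer_QZ (p : nat) : QZ -> Prop := fun x => exists k, x *+ (p ^ k) = 0.

(* External direct sum  (+)_{p in P} H_p  of subgroups H_p of G, realised as
   the finitely supported functions f : nat -> G with f p in H_p for p in P
   and f p = 0 for p not in P. *)
Definition ext_dsum (G : zmodType) (P : set nat) (H : nat -> G -> Prop) :
  (nat -> G) -> Prop :=
  fun f => (forall p, ~ P p -> f p = 0) /\ (forall p, P p -> H p (f p)) /\
           (exists N, forall p, (N <= p)%N -> f p = 0).

Definition set_of_primes (P : set nat) : Prop := forall p, P p -> prime p.

(* In a centrally essential ring every idempotent is central.  Idempotents of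
   End A are projections onto direct summands, and divisible subgroups are
   summands.  The projection onto D being central, Hom(R, D) = 0, so R is
   torsion and no prime occurs in the socles of both R and D.  For a prime p
   with R[p] <> 0, an element of order p of maximal finite height in R, written
   p^m b, gives a pure, hence direct summand, cyclic subgroup <b>; its
   projection being central, every p-element of A lies in <b>.  In the same
   way the rank one divisible hull of an element of infinite order, or the
   Pruefer group over an element of order p, absorbs D, respectively its
   p-component.  Conversely, under these conditions every element whose
   annihilator contains that of an element t of a primary component is a
   multiple of t, so End A is commutative and trivially centrally essential. *)

From Pilot Require Import Defs.
From HB Require Import structures.
From mathcomp Require Import all_boot all_order all_algebra.
From mathcomp Require Import boolp classical_sets functions.
From mathcomp Require Import ring.
Import Order.TTheory GRing.Theory Num.Theory.
Set Implicit Arguments. Unset Strict Implicit. Unset Printing Implicit Defensive.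
Local Open Scope ring_scope.

(** * Subgroups, additive maps and extension of homomorphisms *)

Section Subgroups.
Variable A : zmodType.
Implicit Types (S : A -> Prop) (x y : A).

Lemma subgroup0 S : is_subgroup S -> S 0.
Proof. by case. Qed.

Lemma subgroupB S x y : is_subgroup S -> S x -> S y -> S (x - y).
Proof. by move=> [_ hB]; apply: hB. Qed.

Lemma subgroupN S x : is_subgroup S -> S x -> S (- x).
Proof. by move=> sS hx; rewrite -sub0r; apply: subgroupB => //; apply: subgroup0. Qed.

Lemma subgroupD S x y : is_subgroup S -> S x -> S y -> S (x + y).
Proof. by move=> sS hx hy; rewrite -[y]opprK; apply: subgroupB => //; apply: subgroupN. Qed.

Lemma subgroupMn S x n : is_subgroup S -> S x -> S (x *+ n).
Proof.
move=> sS hx; elim: n => [|n IH]; first by rewrite mulr0n; apply: subgroup0.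
by rewrite mulrS; apply: subgroupD.
Qed.

Lemma subgroupMz S x (i : int) : is_subgroup S -> S x -> S (x *~ i).
Proof.
move=> sS hx; case: i => n; first by rewrite -pmulrn; apply: subgroupMn.
by rewrite NegzE mulrNz -pmulrn; apply: subgroupN => //; apply: subgroupMn.
Qed.

Lemma subgroupT : is_subgroup (fun _ : A => True).
Proof. by []. Qed.

End Subgroups.

Definition additive_on (A B : zmodType) (S : A -> Prop) (f : A -> B) :=
  forall x y, S x -> S y -> f (x + y) = f x + f y.

Section AdditiveOn.
Variables (A B : zmodType) (S : A -> Prop) (f : A -> B).
Hypotheses (sS : is_subgroup S) (fD : additive_on S f).

Lemma additive_on0 : f 0 = 0.
Proof.
have h := fD (subgroup0 sS) (subgroup0 sS); rewrite addr0 in h.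
by rewrite -[LHS](addrK (f 0)) -h subrr.
Qed.

Lemma additive_onN x : S x -> f (- x) = - f x.
Proof.
move=> Sx; have := fD Sx (subgroupN sS Sx); rewrite subrr additive_on0 => /eqP.
by rewrite eq_sym addrC addr_eq0 => /eqP.
Qed.

Lemma additive_onB x y : S x -> S y -> f (x - y) = f x - f y.
Proof. by move=> Sx Sy; rewrite fD ?additive_onN //; apply: subgroupN. Qed.

Lemma additive_onMn x n : S x -> f (x *+ n) = f x *+ n.
Proof.
move=> Sx; elim: n => [|n IH]; first by rewrite !mulr0n additive_on0.
by rewrite !mulrS fD ?IH //; apply: subgroupMn.
Qed.

Lemma additive_onMz x (c : int) : S x -> f (x *~ c) = f x *~ c.
Proof.
move=> Sx; case: c => n; first by rewrite -!pmulrn additive_onMn.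
rewrite NegzE !mulrNz -!pmulrn additive_onN ?additive_onMn //; exact: subgroupMn.
Qed.

End AdditiveOn.

Section Endomorphisms.
Variable A : zmodType.
Implicit Types (f : A -> A) (x y : A).

Lemma endo_additive f : is_endo f -> additive_on (fun _ => True) f.
Proof. by move=> ef x y _ _; apply: ef. Qed.

Lemma endo0 f : is_endo f -> f 0 = 0.
Proof. by move=> ef; apply: (additive_on0 (subgroupT A) (endo_additive ef)). Qed.

Lemma endoB f x y : is_endo f -> f (x - y) = f x - f y.
Proof. by move=> ef; apply: (additive_onB (subgroupT A) (endo_additive ef)). Qed.

Lemma endoMn f x n : is_endo f -> f (x *+ n) = f x *+ n.
Proof. by move=> ef; apply: (additive_onMn (subgroupT A) (endo_additive ef)). Qed.

Lemma endoMz f x i : is_endo f -> f (x *~ i) = f x *~ i.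
Proof. by move=> ef; apply: (additive_onMz (subgroupT A) (endo_additive ef)). Qed.

End Endomorphisms.

Section Extension.
Variables (A : zmodType) (S0 : A -> Prop) (phi0 : A -> A) (T : A -> Prop).
Hypotheses (sS0 : is_subgroup S0) (aS0 : additive_on S0 phi0).
Hypotheses (TS0 : forall x, S0 x -> T (phi0 x)) (sT : is_subgroup T).

Definition partial_ext (u : (A -> Prop) * (A -> A)) :=
  [/\ is_subgroup u.1, additive_on u.1 u.2, (forall x, u.1 x -> T (u.2 x)) &
      (forall x, S0 x -> u.1 x /\ u.2 x = phi0 x)].

Definition ext_le (u v : (A -> Prop) * (A -> A)) :=
  forall x, u.1 x -> v.1 x /\ v.2 x = u.2 x.

Lemma partial_ext_chain (F : set ((A -> Prop) * (A -> A))) u0 :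
  F u0 -> (forall u, F u -> partial_ext u) -> total_on F ext_le ->
  exists v, partial_ext v /\ forall u, F u -> ext_le u v.
Proof.
move=> Fu0 Fext Ftot.
have common u v x y : F u -> F v -> u.1 x -> v.1 y ->
    exists w, [/\ F w, w.1 x & w.1 y].
  move=> Fu Fv ux vy; have [uv|vu] := Ftot _ _ Fu Fv.
    by exists v; split => //; exact: (uv x ux).1.
  by exists u; split => //; exact: (vu y vy).1.
pose US x := exists u, F u /\ u.1 x.
pose Uphi x := if pselect (US x) is left h then (sval (cid h)).2 x else 0.
have agree u x : F u -> u.1 x -> Uphi x = u.2 x.
  move=> Fu ux; rewrite /Uphi; case: pselect => [h|nh]; last first.
    by exfalso; apply: nh; exists u.
  have [Fv vx] := svalP (cid h); move: (sval (cid h)) Fv vx => v Fv vx.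
  have [uv|vu] := Ftot _ _ Fu Fv; first exact: (uv x ux).2.
  by rewrite (vu x vx).2.
exists (US, Uphi); split; last by move=> u Fu x ux; split; [exists u | rewrite /= (agree u)].
have [sU0 _ _ hU0] := Fext _ Fu0.
split => /=.
- split; first by exists u0; split => //; apply: subgroup0.
  move=> x y [u [Fu ux]] [v [Fv vy]].
  have [w [Fw wx wy]] := common _ _ _ _ Fu Fv ux vy.
  by exists w; split => //; case: (Fext _ Fw) => sw _ _ _; exact: subgroupB.
- move=> x y [u [Fu ux]] [v [Fv vy]].
  have [w [Fw wx wy]] := common _ _ _ _ Fu Fv ux vy.
  have [sw aw _ _] := Fext _ Fw.
  by rewrite !(agree w) // ?aw //; apply: subgroupD.
- by move=> x [u [Fu ux]]; rewrite (agree u) //; case: (Fext _ Fu) => _ _ hT _; exact: hT.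
- move=> x hx; have [ux ex] := hU0 x hx.
  by split; [exists u0 | rewrite (agree u0)].
Qed.

(* The hypothesis on [y] is exactly what makes [s + x *~ j |-> u.2 s + y *~ j]
   well defined on the subgroup generated by [u.1] and [x]. *)
Lemma partial_ext_adjoin u x y : partial_ext u -> T y ->
  (forall i : int, u.1 (x *~ i) -> u.2 (x *~ i) = y *~ i) ->
  exists v, [/\ partial_ext v, ext_le u v & v.1 x].
Proof.
case: u => [St ph] [/= sg ag hT h0] Ty hy.
pose S' z := exists s j, St s /\ z = s + x *~ j.
have wd s j s' j' : St s -> St s' -> s + x *~ j = s' + x *~ j' ->
    ph s + y *~ j = ph s' + y *~ j'.
  move=> hs hs' e.
  have e2 : x *~ (j - j') = s' - s.
    by rewrite mulrzBr -[x *~ j](addKr s) e addrA addrK addrC.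
  have hs2 : St (x *~ (j - j')) by rewrite e2; apply: subgroupB.
  have := hy _ hs2; rewrite e2 (additive_onB sg ag) // mulrzBr => e3.
  by rewrite -[ph s'](subrK (ph s)) e3 addrAC subrK addrC.
pose ph' z := if pselect (S' z) is left h
  then ph (sval (cid h)) + y *~ (sval (cid (svalP (cid h)))) else 0.
have ph'E s j : St s -> ph' (s + x *~ j) = ph s + y *~ j.
  move=> hs; rewrite /ph'; case: pselect => [h|nh]; last first.
    by exfalso; apply: nh; exists s, j.
  have [hs2 e] := svalP (cid (svalP (cid h))).
  exact: (wd _ _ _ _ hs2 hs (esym e)).
have ph'0 s : St s -> ph' s = ph s.
  by move=> hs; have := ph'E s 0 hs; rewrite mulr0z !addr0.
have S'0 s : St s -> S' s by move=> hs; exists s, 0; rewrite mulr0z addr0.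
exists (S', ph'); split => /=.
- split => /=.
  + split; first by apply: S'0; apply: subgroup0.
    move=> _ _ [s [j [hs ->]]] [s' [j' [hs' ->]]]; exists (s - s'), (j - j').
    by split; [exact: subgroupB | rewrite mulrzBr opprD addrACA].
  + move=> _ _ [s [j [hs ->]]] [s' [j' [hs' ->]]].
    have hss : St (s + s') by apply: subgroupD.
    by rewrite addrACA -mulrzDr !ph'E // ag // mulrzDr addrACA.
  + move=> _ [s [j [hs ->]]]; rewrite ph'E //.
    by apply: subgroupD => //; [exact: hT | exact: subgroupMz].
  + by move=> z hz; have [hz1 hz2] := h0 z hz; split; [apply: S'0 | rewrite ph'0].
- by move=> z hz /=; split; [apply: S'0 | rewrite ph'0].
- by exists 0, 1; rewrite add0r mulr1z; split => //; apply: subgroup0.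
Qed.

Lemma endo_extension :
  (forall u, partial_ext u -> forall x, exists y, T y /\
      forall i : int, u.1 (x *~ i) -> u.2 (x *~ i) = y *~ i) ->
  exists f, [/\ is_endo f, (forall x, T (f x)) & forall x, S0 x -> f x = phi0 x].
Proof.
move=> step.
pose G := {u | partial_ext u}.
have g0 : partial_ext (S0, phi0) by split.
pose R (u v : G) := `[< ext_le (sval u) (sval v) >].
have [| | |t tmax] := @ZL_preorder G (exist _ _ g0) R.
- by move=> u; apply/asboolP => x ux.
- move=> u v w /asboolP uv /asboolP vw; apply/asboolP => x /uv [vx <-]; exact: vw.
- move=> F Ftot.
  have [[u0 Fu0]|F0] := pselect (exists u, F u); last first.
    by exists (exist _ _ g0) => s Fs; exfalso; apply: F0; exists s.
  have [v [gv ub]] : exists v, partial_ext v /\ forall u, [set sval u | u in F]%classic u -> ext_le u v.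
    apply: (@partial_ext_chain _ (sval u0)); first by exists u0.
      by move=> _ [u _ <-]; apply: svalP.
    move=> _ _ [u Fu <-] [v Fv <-].
    by case: (Ftot _ _ Fu Fv) => /asboolP; [left | right].
  by exists (exist _ _ gv) => u Fu; apply/asboolP; apply: ub; exists u.
have tT x : (sval t).1 x.
  apply: contrapT => nx.
  have [y [Ty hy]] := step _ (svalP t) x.
  have [v [gv tv vx]] := partial_ext_adjoin (svalP t) Ty hy.
  have /asboolP vt := tmax (exist _ _ gv) (asboolT tv).
  exact: nx (vt x vx).1.
case: (svalP t) => sg ag hT h0.
exists (sval t).2; split; first by move=> a b; apply: ag; apply: tT.
  by move=> a; apply: hT; apply: tT.
by move=> a ha; exact: (h0 a ha).2.
Qed.

End Extension.

Section Multiples.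
Variable A : zmodType.
Implicit Types (S T : A -> Prop) (x y : A).

Lemma mulrz_eq0_abs x (i : int) : (x *~ i = 0) <-> (x *+ `|i|%N = 0).
Proof.
case: i => n /=; first by rewrite -pmulrn.
rewrite NegzE mulrNz -pmulrn; split; last by move=> ->; rewrite oppr0.
by move/eqP; rewrite oppr_eq0 => /eqP.
Qed.

Lemma mulrz_dvd_eq0 x n (i : int) : x *+ n = 0 -> (n %| `|i|)%N -> x *~ i = 0.
Proof. by move=> hn /dvdnP [q hq]; apply/mulrz_eq0_abs; rewrite hq mulnC mulrnA hn mul0rn. Qed.

Lemma mulrz_gcdz_eq0 x (a b : int) : x *~ a = 0 -> x *~ b = 0 -> x *~ gcdz a b = 0.
Proof.
move=> ha hb; have [u [v <-]] := Bezoutz a b.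
by rewrite mulrzDr (mulrC u) (mulrC v) !mulrzA ha hb !mul0rz addr0.
Qed.

Lemma mulrn_coprime_eq0 x a b : x *+ a = 0 -> x *+ b = 0 -> coprime a b -> x = 0.
Proof.
rewrite !pmulrn => ha hb cab; have := mulrz_gcdz_eq0 ha hb.
by rewrite /gcdz /= (eqP cab) mulr1z.
Qed.

Lemma mulrn_ppowD_eq0 x y p a b :
  x *+ p ^ a = 0 -> y *+ p ^ b = 0 -> (x + y) *+ p ^ (a + b) = 0.
Proof.
move=> hx hy; rewrite mulrnDl expnD mulrnA hx mul0rn add0r.
by rewrite mulnC mulrnA hy mul0rn.
Qed.

Lemma order_ppow_dvd p m x (i : int) : prime p -> x *+ p ^ m = 0 ->
  x *+ p ^ m.-1 <> 0 -> x *~ i = 0 -> (p ^ m %| `|i|)%N.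
Proof.
move=> pp hm hm1 hi.
have hg := mulrz_gcdz_eq0 hi (etrans (esym (pmulrn _ _)) hm).
have [e le_em ge] := dvdn_pfactor _ _ pp (dvdn_gcdr `|i| (p ^ m)).
rewrite /gcdz /= ge -pmulrn in hg.
have [em|nem] := eqVneq e m; first by rewrite -em -ge dvdn_gcdl.
have lt_em : (e < m)%N by rewrite ltn_neqAle nem.
have le : (e <= m.-1)%N by rewrite -ltnS prednK // (leq_ltn_trans _ lt_em).
by case: hm1; rewrite -(subnKC le) expnD mulrnA hg mul0rn.
Qed.

Lemma coprime_ppow_div x p s k : x *+ p ^ s = 0 -> coprime p k ->
  exists u : int, (x *~ u) *+ k = x.
Proof.
move=> hx cpk; have cpk' : coprime k (p ^ s) by rewrite coprime_sym coprimeXl.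
have [u [v e]] := Bezoutz k%:Z (p ^ s)%:Z.
have g1 : gcdz k%:Z (p ^ s)%:Z = 1 by rewrite /gcdz /= (eqP cpk').
exists u; rewrite pmulrn mulrzA_C -[RHS]mulr1z -g1 -e mulrzDr (mulrC v).
by rewrite (mulrzA x (p ^ s)%:Z v) -(pmulrn x) hx mul0rz addr0 (mulrC u).
Qed.

Lemma ppow_socle x p s : x <> 0 -> x *+ p ^ s = 0 ->
  exists t, x *+ p ^ t <> 0 /\ (x *+ p ^ t) *+ p = 0.
Proof.
elim: s => [|s IH] nx hx; first by case: nx; rewrite expn0 mulr1n in hx.
have [h|h] := pselect (x *+ p ^ s = 0); first exact: IH.
by exists s; split => //; rewrite -mulrnA -expnSr.
Qed.

Definition multiples x : A -> Prop := fun z => exists i : int, z = x *~ i.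

Lemma multiples_subgroup x : is_subgroup (multiples x).
Proof.
split; first by exists 0; rewrite mulr0z.
by move=> _ _ [i ->] [j ->]; exists (i - j); rewrite mulrzBr.
Qed.

Lemma multiples_hom x y : (forall i, x *~ i = 0 -> y *~ i = 0) ->
  exists phi, additive_on (multiples x) phi /\ forall i, phi (x *~ i) = y *~ i.
Proof.
move=> ann.
pose phi z := if pselect (multiples x z) is left h then y *~ sval (cid h) else 0.
have phiE i : phi (x *~ i) = y *~ i.
  rewrite /phi; case: pselect => [h|nh]; last by case: nh; exists i.
  have e := svalP (cid h); move: (sval (cid h)) e => j e.
  apply/eqP; rewrite -subr_eq0 -mulrzBr; apply/eqP; apply: ann.
  by rewrite mulrzBr -e subrr.
exists phi; split => //.
by move=> _ _ [i ->] [j ->]; rewrite -mulrzDr !phiE mulrzDr.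
Qed.

Lemma adjoin_dichotomy S phi x : is_subgroup S -> additive_on S phi ->
  (forall i, S (x *~ i) -> i = 0) \/
  (exists k, [/\ (0 < k)%N, S (x *+ k), (forall n, S (x *+ n) -> (k %| n)%N) &
     forall y, y *+ k = phi (x *+ k) -> forall i, S (x *~ i) -> phi (x *~ i) = y *~ i]).
Proof.
move=> sS aS.
have [hex|nex] := pselect (exists k, (0 < k)%N /\ S (x *+ k)); last first.
  left => i hi; apply/eqP; apply: contraT => i0; exfalso; apply: nex.
  exists `|i|%N; split; first by rewrite absz_gt0.
  case: i i0 hi => n _ hi /=; first by rewrite pmulrn.
  rewrite NegzE mulrNz in hi; rewrite -[_ *+ _]opprK pmulrn; exact: subgroupN.
pose P k := `[< (0 < k)%N /\ S (x *+ k) >].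
have hP : exists k, P k by case: hex => k hk; exists k; apply/asboolP.
case: (ex_minnP hP) => k /asboolP [k0 Sk] kmin.
have divi i : S (x *~ i) -> (k%:Z %| i)%Z.
  move=> hi; apply/dvdz_mod0P.
  have knz : k%:Z != 0 by rewrite eqz_nat -lt0n.
  have r0 := modz_ge0 i knz.
  have rlt := ltz_pmod i (k0 : (0 < k%:Z)%R).
  move: (i %% k)%Z r0 rlt (divz_eq i k) => r r0 rlt ei.
  have Sr : S (x *~ r).
    have e1 : x *~ i = (x *+ k) *~ (i %/ k)%Z + x *~ r.
      by rewrite {1}ei mulrzDr pmulrn -mulrzA (mulrC k%:Z).
    have -> : x *~ r = x *~ i - (x *+ k) *~ (i %/ k)%Z by rewrite e1 addrC addKr.
    by apply: subgroupB => //; apply: subgroupMz.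
  case: r r0 rlt ei Sr => // -[|n] // _ rlt ei Sr.
  have := kmin n.+1; rewrite -pmulrn in Sr.
  have -> : P n.+1 by apply/asboolP.
  by move=> /(_ isT); rewrite leqNgt -ltz_nat rlt.
right; exists k; split => //.
  by move=> n hn; have := divi n; rewrite -pmulrn dvdzE /=; apply.
move=> y hy i hi; have /dvdzP [q ->] := divi i hi.
by rewrite mulrC !mulrzA -!pmulrn (additive_onMz sS aS) // hy.
Qed.

End Multiples.

Section Divisible.
Variable A : zmodType.
Implicit Types (S T : A -> Prop) (x y : A).

Lemma divisible_extension T S phi : divisible_sub T -> is_subgroup S ->
  additive_on S phi -> (forall z, S z -> T (phi z)) ->
  exists f, [/\ is_endo f, (forall z, T (f z)) & forall z, S z -> f z = phi z].
Proof.
move=> [sT dT] sS aS TS; apply: endo_extension => // u [su au Tu _] x.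
case: (adjoin_dichotomy x su au) => [h0|[k [k0 Sk _ hk]]].
  exists 0; split; first exact: subgroup0.
  by move=> i hi; rewrite (h0 i hi) mulr0z mul0rz (additive_on0 su au).
have [y [Ty e]] := dT _ k (Tu _ Sk) k0.
by exists y; split => //; apply: hk.
Qed.

Lemma divisible_hom_multiples T x y : divisible_sub T -> T y ->
  (forall i, x *~ i = 0 -> y *~ i = 0) ->
  exists f, [/\ is_endo f, (forall z, T (f z)) & f x = y].
Proof.
move=> dT Ty ann; have [phi [aphi phiE]] := multiples_hom ann.
have TS z : multiples x z -> T (phi z).
  by move=> [i ->]; rewrite phiE; apply: subgroupMz => //; case: dT.
have [f [ef Tf hf]] := divisible_extension dT (multiples_subgroup x) aphi TS.
exists f; split => //; rewrite hf; last by exists 1; rewrite mulr1z.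
by have := phiE 1; rewrite !mulr1z.
Qed.

Lemma divisible_projection T : divisible_sub T ->
  exists e, [/\ is_endo e, (forall a, T (e a)) & forall t, T t -> e t = t].
Proof.
move=> dT; have [e [ee Te he]] := divisible_extension dT dT.1
  (fun _ _ _ _ => erefl : id (_ + _) = id _ + id _) (fun _ h => h).
by exists e; split.
Qed.

Lemma dsum_projection D R : internal_dsum D R ->
  exists pi : A -> A, [/\ is_endo pi, (forall a, D (pi a)), (forall a, R (a - pi a)),
     (forall d, D d -> pi d = d) & (forall r, R r -> pi r = 0)].
Proof.
move=> [sD [sR [DR dec]]].
have uniq s t s' t' : D s -> R t -> D s' -> R t' -> s + t = s' + t' -> s = s'.
  move=> hs ht hs' ht' e; apply/eqP; rewrite -subr_eq0; apply/eqP.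
  apply: DR; first exact: subgroupB.
  have -> : s - s' = t' - t by apply/eqP; rewrite subr_eq addrAC eq_sym subr_eq addrC e.
  exact: subgroupB.
pose pi a := sval (cid (dec a)).
have piE a s t : D s -> R t -> a = s + t -> pi a = s.
  move=> hs ht ->; rewrite /pi; have [t' [hs' [ht' e]]] := svalP (cid (dec (s + t))).
  by apply: (uniq _ _ _ _ hs' ht' hs ht); rewrite -e.
have piP a : D (pi a) /\ R (a - pi a).
  rewrite /pi; have [t' [hs' [ht' e]]] := svalP (cid (dec a)).
  by split => //; rewrite [X in X - _]e addrAC subrr add0r.
exists pi; split.
- move=> a b; have [ha ra] := piP a; have [hb rb] := piP b.
  apply: (piE _ _ (a - pi a + (b - pi b))); [exact: subgroupD|exact: subgroupD|].
  by rewrite addrACA !subrKC.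
- by move=> a; case: (piP a).
- by move=> a; case: (piP a).
- by move=> d hd; apply: (piE _ _ 0) => //; [exact: subgroup0 | rewrite addr0].
- by move=> r hr; apply: (piE _ _ r) => //; [exact: subgroup0 | rewrite add0r].
Qed.

End Divisible.

(** * Central idempotents and summands *)

Section CentralIdempotents.
Variable A : zmodType.
Hypothesis CE : End_centrally_essential A.

(* If [e f (1 - e)] were nonzero, central essentiality would give a nonzero
   central [y] with [y = e y] and [y e = 0]; centrality of [y] then forces
   [y = e y = y e = 0]. *)
Lemma CE_idempotent_corner (e f : A -> A) : is_endo e -> (forall z, e (e z) = e z) ->
  is_endo f -> forall z, e (f (z - e z)) = 0.
Proof.
move=> ee eid ef z; apply: contrapT => nz.
pose a w := e (f (w - e w)).
have ea : is_endo a by move=> u v; rewrite /a ee opprD addrACA -ee -ef.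
have [x [y [[ex cx] [[ey cy] [_ [[w yw] hxy]]]]]] := CE ea (ex_intro _ z nz).
apply: yw.
have ye : y w = e (y w) by rewrite -hxy /a eid.
have ye0 : y (e w) = 0 by rewrite -hxy /a (cx e ee) eid subrr (endo0 ef) (endo0 ee).
by rewrite ye -(cy e ee) ye0.
Qed.

Lemma CE_idempotent_central (e f : A -> A) : is_endo e -> (forall z, e (e z) = e z) ->
  is_endo f -> forall z, e (f z) = f (e z).
Proof.
move=> ee eid ef z.
pose e' w := w - e w.
have ee' : is_endo e' by move=> u v; rewrite /e' ee opprD addrACA.
have eid' w : e' (e' w) = e' w by rewrite /e' (endoB _ _ ee) eid subrr subr0.
have /eqP := CE_idempotent_corner ee eid ef z.
rewrite (endoB _ _ ef) (endoB _ _ ee) subr_eq0 => /eqP ->.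
have /eqP := CE_idempotent_corner ee' eid' ef z.
by rewrite /e' subKr subr_eq0 => /eqP.
Qed.

End CentralIdempotents.

Section PureCyclic.
Variables (A : zmodType) (p m : nat) (b : A).
Hypotheses (pp : prime p) (hm : b *+ p ^ m = 0) (hm1 : b *+ p ^ m.-1 <> 0).
Hypothesis pure : forall j (z : A), b *~ j = z *+ p ^ m -> b *~ j = 0.

Definition pure_dom (z : A) := exists (j : int) w, z = b *~ j + w *+ p ^ m.

Definition pure_retraction (z : A) :=
  if pselect (pure_dom z) is left h then b *~ sval (cid h) else 0.

Lemma pure_retractionE j w : pure_retraction (b *~ j + w *+ p ^ m) = b *~ j.
Proof.
rewrite /pure_retraction; case: pselect => [h|nh]; last by case: nh; exists j, w.
have [w' e] := svalP (cid h); move: (sval (cid h)) e => j' e.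
have e2 : b *~ (j' - j) = (w - w') *+ p ^ m.
  by apply/eqP; rewrite mulrzBr mulrnBl subr_eq addrAC [w *+ _ + _]addrC e addrK.
by have := pure e2; rewrite mulrzBr => /eqP; rewrite subr_eq0 => /eqP.
Qed.

Lemma pure_dom_subgroup : is_subgroup pure_dom.
Proof.
split; first by exists 0, 0; rewrite mulr0z mul0rn addr0.
move=> _ _ [j [w ->]] [j' [w' ->]]; exists (j - j'), (w - w').
by rewrite mulrzBr mulrnBl opprD addrACA.
Qed.

Lemma pure_retraction_additive : additive_on pure_dom pure_retraction.
Proof.
move=> _ _ [j [w ->]] [j' [w' ->]].
by rewrite addrACA -mulrzDr -mulrnDl !pure_retractionE mulrzDr.
Qed.

(* The order bound on [b] and purity give a [k]-th root of [u.2 (x *+ k)]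
   among the multiples of [b]. *)
Lemma pure_retraction_step u : partial_ext pure_dom pure_retraction (multiples b) u ->
  forall x, exists y, multiples b y /\
    forall i : int, u.1 (x *~ i) -> u.2 (x *~ i) = y *~ i.
Proof.
move=> [su au Tu h0] x.
case: (adjoin_dichotomy x su au) => [hz|[k [k0 Sk kdiv hk]]].
  exists 0; split; first by exists 0; rewrite mulr0z.
  by move=> i hi; rewrite (hz i hi) mulr0z mul0rz (additive_on0 su au).
have Sm : pure_dom (x *+ p ^ m) by exists 0, x; rewrite mulr0z add0r.
have [Sm1 Sm2] := h0 _ Sm.
have um0 : u.2 (x *+ p ^ m) = 0.
  by rewrite Sm2 -[x *+ _]add0r -(mulr0z b) pure_retractionE mulr0z.
have [i le_im ki] := dvdn_pfactor _ _ pp (kdiv _ Sm1).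
have [c hc] := Tu _ Sk.
have e1 : b *~ (c * (p ^ (m - i))%:Z) = 0.
  by rewrite mulrzA -hc -pmulrn -(additive_onMn su au) // -mulrnA ki -expnD subnKC.
have := order_ppow_dvd pp hm hm1 e1.
rewrite abszM /= -{1}(subnKC le_im) expnD dvdn_pmul2r ?expn_gt0 ?prime_gt0 //.
rewrite -(absz_nat (p ^ i)) -dvdzE => /dvdzP [q hq].
exists (b *~ q); split; first by exists q.
apply: hk; rewrite hc hq ki pmulrn -mulrzA.
by congr (_ *~ _); rewrite mulrC.
Qed.

Lemma pure_cyclic_projection :
  exists e, [/\ is_endo e, (forall z, multiples b (e z)) & e b = b].
Proof.
have [|e [ee Te he]] := endo_extension pure_dom_subgroup pure_retraction_additive
  _ (multiples_subgroup b) pure_retraction_step.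
  by move=> _ [j [w ->]]; rewrite pure_retractionE; exists j.
have Db : pure_dom b by exists 1, 0; rewrite mulr1z mul0rn addr0.
exists e; split => //; rewrite he //.
by have := pure_retractionE 1 0; rewrite mulr1z mul0rn addr0.
Qed.

End PureCyclic.

Section CentralSummands.
Variable A : zmodType.
Hypothesis CE : End_centrally_essential A.

Lemma CE_divisible_summand_ann T D e (x w : A) : divisible_sub D ->
  is_endo e -> (forall a, T (e a)) -> (forall t, T t -> e t = t) -> T x ->
  D w -> e w = 0 -> (forall i, x *~ i = 0 -> w *~ i = 0) -> w = 0.
Proof.
move=> dD ee Te he Tx Dw ew ann.
have eid a : e (e a) = e a by apply: he.
have [f [ef _ fx]] := divisible_hom_multiples dD Dw ann.
by have := CE_idempotent_central CE ee eid ef x; rewrite (he _ Tx) fx ew.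
Qed.

Lemma CE_cyclic_summand_absorbs p m (b : A) e : prime p ->
  b *+ p ^ m = 0 -> b *+ p ^ m.-1 <> 0 ->
  is_endo e -> (forall z, multiples b (e z)) -> e b = b ->
  forall z s, z *+ p ^ s = 0 -> multiples b z.
Proof.
move=> pp hm hm1 ee Te eb.
have m0 : (0 < m)%N by case: m hm hm1 => // hm hm1; case: hm1.
have eid z : e (e z) = e z by have [j ->] := Te z; rewrite (endoMz _ _ ee) eb.
move=> z s hz; have [j hj] := Te z.
have [h|h] := pselect (z - e z = 0).
  by exists j; rewrite -hj; apply/eqP; rewrite -subr_eq0; apply/eqP.
have hz' : (z - e z) *+ p ^ (s + m) = 0.
  apply: mulrn_ppowD_eq0 => //.
  by rewrite mulNrn hj pmulrn mulrzAC -pmulrn hm mul0rz oppr0.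
have [t [wn wp]] := ppow_socle h hz'.
have ann : forall i, b *~ i = 0 -> ((z - e z) *+ p ^ t) *~ i = 0.
  move=> i hi; apply: (mulrz_dvd_eq0 wp).
  exact: dvdn_trans (dvdn_exp m0 (dvdnn p)) (order_ppow_dvd pp hm hm1 hi).
have [g [ag gE]] := multiples_hom ann.
have ef : is_endo (fun x => g (e x)) by move=> x y; rewrite ee; apply: ag; apply: Te.
case: wn; have /= := CE_idempotent_central CE ee eid ef b.
rewrite eid eb -[b]mulr1z gE mulr1z => <-.
by rewrite (endoMn _ _ ee) (endoB _ _ ee) eid subrr mul0rn.
Qed.

End CentralSummands.

(** * Divisible hulls *)

Section Chains.
Variable A : zmodType.
Implicit Types (D T : A -> Prop) (c : nat -> A) (s : nat -> nat).

Fixpoint chain_factor s n t :=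
  if t is t'.+1 then (s (n + t')%N * chain_factor s n t')%N else 1%N.

Lemma chain_factor_const p n t : chain_factor (fun _ => p) n t = (p ^ t)%N.
Proof. by elim: t => [|t IH] //=; rewrite IH expnS. Qed.

Lemma chain_factor_gt0 s n t : (forall i, (0 < s i)%N) -> (0 < chain_factor s n t)%N.
Proof. by move=> hs; elim: t => [|t IH] //=; rewrite muln_gt0 hs IH. Qed.

Lemma chain_mulrn s c : (forall n, c n.+1 *+ s n = c n) ->
  forall n t, c n = c (n + t)%N *+ chain_factor s n t.
Proof.
move=> hc n; elim => [|t IH]; first by rewrite addn0 mulr1n.
by rewrite /= mulrnA addnS hc -IH.
Qed.

Definition chain_span c : A -> Prop := fun z => exists n (j : int), z = c n *~ j.

Lemma chain_span_subgroup s c : (forall n, c n.+1 *+ s n = c n) ->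
  is_subgroup (chain_span c).
Proof.
move=> hc; split; first by exists 0%N, 0; rewrite mulr0z.
move=> _ _ [n [j ->]] [n' [j' ->]].
rewrite (chain_mulrn hc n n') (chain_mulrn hc n' n) (addnC n' n).
exists (n + n')%N, ((chain_factor s n n')%:Z * j - (chain_factor s n' n)%:Z * j').
by rewrite mulrzBr !mulrzA -!pmulrn.
Qed.

Lemma chain_span_divisible s c : (forall n, c n.+1 *+ s n = c n) ->
  (forall n k, (0 < k)%N -> exists N (q : int), c n = c N *~ (q * k%:Z)) ->
  divisible_sub (chain_span c).
Proof.
move=> hc h; split; first exact: (chain_span_subgroup hc).
move=> _ k [n [j ->]] k0; have [N [q ->]] := h n k k0.
exists (c N *~ (q * j)); split; first by exists N, (q * j).
by rewrite pmulrn -!mulrzA; congr (_ *~ _); rewrite mulrAC.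
Qed.

Lemma divisible_chain T x s : divisible_sub T -> (forall n, (0 < s n)%N) -> T x ->
  exists c, [/\ c 0%N = x, (forall n, T (c n)) & forall n, c n.+1 *+ s n = c n].
Proof.
move=> [sT dT] spos Tx.
pose h y n := if pselect (exists z, T z /\ z *+ s n = y) is left hh
  then sval (cid hh) else 0.
have hP y n : T y -> T (h y n) /\ h y n *+ s n = y.
  move=> Ty; rewrite /h; case: pselect => [hh|nh]; first exact: svalP (cid hh).
  by case: nh; apply: dT.
pose fix c n := if n is n'.+1 then h (c n') n' else x.
have cT n : T (c n) by elim: n => [|n IH] //=; case: (hP _ n IH).
by exists c; split => // n /=; case: (hP _ n (cT n)).
Qed.

(* Dividing by [(n+1)!] at step [n] makes every [k] divide the cumulated
   factor from some point on. *)
Lemma rank1_divisible_hull D x : divisible_sub D -> D x ->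
  exists c, [/\ c 0%N = x, (forall n, exists P, (0 < P)%N /\ c n *+ P = x),
    (forall z, chain_span c z -> D z) & divisible_sub (chain_span c)].
Proof.
move=> dD Dx.
pose s n := (n.+1)`!.
have spos n : (0 < s n)%N by rewrite /s fact_gt0.
have [c [c0 Dc hc]] := divisible_chain dD spos Dx.
exists c; split => //.
- move=> n; exists (chain_factor s 0 n); split; first exact: chain_factor_gt0.
  by rewrite -c0 (chain_mulrn hc 0 n).
- by move=> _ [n [j ->]]; apply: subgroupMz => //; exact: dD.1.
apply: (chain_span_divisible hc) => n [//|k'] _.
have /dvdnP [q hq] : (k'.+1 %| chain_factor s n k'.+1)%N.
  by rewrite /= dvdn_mulr // /s dvdn_fact //= ltnS leq_addl.
exists (n + k'.+1)%N, q%:Z; rewrite (chain_mulrn hc n k'.+1) hq.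
by rewrite pmulrn PoszM.
Qed.

Lemma prufer_divisible_hull D p d : prime p -> divisible_sub D -> D d -> d *+ p = 0 ->
  exists c, [/\ c 0%N = d, (forall n, D (c n)), (forall n, c n.+1 *+ p = c n),
    (forall n, c n *+ p ^ n = d) & divisible_sub (chain_span c)].
Proof.
move=> pp dD Dd hd.
have spos n : (0 < (fun _ : nat => p) n)%N by rewrite prime_gt0.
have [c [c0 Dc hc]] := divisible_chain dD spos Dd.
have cpow n : c n *+ p ^ n = d by rewrite -c0 (chain_mulrn hc 0 n) chain_factor_const.
exists c; split => //.
apply: (chain_span_divisible hc) => n k k0.
have [k' cpk hk] := pfactor_coprime pp k0.
set l := logn p k in hk.
have ckill : c (n + l)%N *+ p ^ (n + l).+1 = 0 by rewrite expnSr mulrnA cpow.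
have [u hu] := coprime_ppow_div ckill cpk.
exists (n + l)%N, u; rewrite (chain_mulrn hc n l) chain_factor_const hk.
by rewrite PoszM mulrA mulrzA -(pmulrn _ (p ^ l)) mulrzA -pmulrn hu.
Qed.

End Chains.

Section RankOne.
Variables (A : zmodType) (x : A).
Hypothesis x_free : forall i, x *~ i = 0 -> i = 0.

(* [z] has coordinate [j / m] when [z *+ m = x *~ j]. *)
Definition rat_coord (z : A) : rat :=
  if pselect (exists mj : nat * int, (0 < mj.1)%N /\ z *+ mj.1 = x *~ mj.2) is left h
  then (sval (cid h)).2%:~R / (sval (cid h)).1%:R else 0.

Lemma rat_coordE z m j : (0 < m)%N -> z *+ m = x *~ j -> rat_coord z = j%:~R / m%:R.
Proof.
move=> m0 h; rewrite /rat_coord; case: pselect => [hh|nh]; last by case: nh; exists (m, j).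
have [m'0 h'] := svalP (cid hh); move: (sval (cid hh)) m'0 h' => [m' j'] /= m'0 h'.
have k : j * m'%:Z = j' * m%:Z.
  apply/eqP; rewrite -subr_eq0; apply/eqP; apply: x_free.
  by rewrite mulrzBr !mulrzA -!pmulrn -h -h' -!mulrnA mulnC subrr.
have km : m%:R != 0 :> rat by rewrite pnatr_eq0 -lt0n.
have km' : m'%:R != 0 :> rat by rewrite pnatr_eq0 -lt0n.
rewrite -[m%:R]/((m%:Z)%:~R) -[m'%:R]/((m'%:Z)%:~R) in km km' *.
by apply/eqP; rewrite eqr_div // -!intrM k.
Qed.

Lemma rank1_iso_Q D : divisible_sub D -> D x ->
  (forall z, D z -> exists (m : nat) (j : int), (0 < m)%N /\ z *+ m = x *~ j) ->
  (forall z m, D z -> (0 < m)%N -> z *+ m = 0 -> z = 0) ->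
  sub_isomorphic D (fun _ : rat => True).
Proof.
move=> [sD dD] Dx rk tf.
have nz m : (0 < m)%N -> m%:R != 0 :> rat by rewrite pnatr_eq0 -lt0n.
exists rat_coord; split.
  move=> z z' Dz Dz'.
  have [m [j [m0 hz]]] := rk z Dz; have [m' [j' [m'0 hz']]] := rk z' Dz'.
  have hs : (z + z') *+ (m * m') = x *~ (j * m'%:Z + j' * m%:Z).
    by rewrite mulrnDl mulrzDr !mulrzA -!pmulrn -hz -hz' mulrnA mulnC mulrnA.
  rewrite (rat_coordE _ hs) ?muln_gt0 ?m0 // (rat_coordE m0 hz) (rat_coordE m'0 hz').
  have := nz _ m0; have := nz _ m'0; move=> k' k.
  by rewrite intrD !intrM natrM; field; apply/andP.
split => //; split.
  move=> z z' Dz Dz' e.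
  have [m [j [m0 hz]]] := rk z Dz; have [m' [j' [m'0 hz']]] := rk z' Dz'.
  rewrite (rat_coordE m0 hz) (rat_coordE m'0 hz') in e.
  have e2 : j * m'%:Z = j' * m%:Z.
    apply: (@intr_inj rat); move/eqP: e; rewrite eqr_div ?nz // => /eqP.
    by rewrite !intrM.
  apply/eqP; rewrite -subr_eq0; apply/eqP; apply: (tf _ (m * m')%N).
  - exact: subgroupB.
  - by rewrite muln_gt0 m0.
  rewrite mulrnBl mulrnA hz mulnC mulrnA hz' !pmulrn -!mulrzA.
  by rewrite e2 subrr.
move=> q _.
have dq : (0 < `|denq q|)%N by rewrite absz_gt0 denq_neq0.
have [d [Dd hd]] := dD (x *~ numq q) `|denq q|%N (subgroupMz _ sD Dx) dq.
exists d; split => //.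
rewrite (rat_coordE dq hd) -[_%:R]/((`|denq q|%N%:Z)%:~R) gtz0_abs ?denq_gt0 //.
exact: divq_num_den.
Qed.

End RankOne.

Local Notation frac := Defs.frac.

(** * The group Q/Z *)

Lemma frac_int (z : int) : frac z%:~R = 0.
Proof. by rewrite /frac intrKfloor subrr. Qed.

Lemma fracDr x y : frac (x + frac y) = frac (x + y).
Proof. by rewrite addrC fracDl addrC. Qed.

Lemma fracN x : frac (- frac x) = frac (- x).
Proof.
have -> : - frac x = - x + (Num.floor x)%:~R by rewrite /frac opprB addrC.
exact: fracDz.
Qed.

Lemma qzval0 : qzval (0 : QZ) = 0.
Proof. exact: frac_id. Qed.

Lemma qz_eq0 (a : QZ) : a = 0 <-> qzval a = 0.
Proof. by split => [->|h]; [exact: qzval0 | apply: val_inj; rewrite /= h -qzval0]. Qed.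

Lemma qzvalMn (a : QZ) n : qzval (a *+ n) = frac (qzval a * n%:R).
Proof.
elim: n => [|n IH]; first by rewrite mulr0n mulr0 qzval0 frac_id.
by rewrite mulrS [qzval _]/= IH fracDr mulrS mulrDr mulr1.
Qed.

Lemma qzvalMz (a : QZ) (c : int) : qzval (a *~ c) = frac (qzval a * c%:~R).
Proof.
case: c => n; first by rewrite -pmulrn qzvalMn.
by rewrite NegzE mulrNz [qzval (- _)]/= -pmulrn qzvalMn fracN intrN mulrN.
Qed.

Lemma qz_mulrn_eq0 (a : QZ) n : a *+ n = 0 <-> qzval a * n%:R = (Num.floor (qzval a * n%:R))%:~R.
Proof.
rewrite qz_eq0 qzvalMn /frac.
by split => [/eqP|h]; [rewrite subr_eq0 => /eqP | apply/eqP; rewrite subr_eq0; apply/eqP].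
Qed.

Lemma qz_mulrn_int_eq0 (a : QZ) n (t : int) : qzval a * n%:R = t%:~R -> a *+ n = 0.
Proof. by move=> h; apply/qz_eq0; rewrite qzvalMn h frac_int. Qed.

Lemma qz_torsion (x : QZ) : exists e, (0 < e)%N /\ x *+ e = 0.
Proof.
exists `|denq (qzval x)|%N; split; first by rewrite absz_gt0 denq_neq0.
apply: (qz_mulrn_int_eq0 (t := numq (qzval x))).
by rewrite -[X in _ * X]/((`|denq (qzval x)|%N%:Z)%:~R) gtz0_abs ?denq_gt0 // numqE.
Qed.

(* With [x = n/d] in lowest terms and [y = t/d], [u n + v d = 1] gives
   [y = x *~ (u t)]. *)
Lemma qz_ann_multiple (x y : QZ) : (forall n, x *+ n = 0 -> y *+ n = 0) ->
  exists c : int, y = x *~ c.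
Proof.
move=> ann.
set vx := qzval x; set vy := qzval y.
set N := `|denq vx|%N.
have NR : (N%:R : rat) = (denq vx)%:~R by rewrite -[LHS]/((N%:Z)%:~R) gtz0_abs ?denq_gt0.
have xN : x *+ N = 0 by apply: (qz_mulrn_int_eq0 (t := numq vx)); rewrite NR numqE.
have /qz_mulrn_eq0 := ann _ xN; rewrite -/vy => hy.
set t := Num.floor (vy * N%:R) in hy.
have [u [v huv]] := Bezoutz (numq vx) (denq vx).
rewrite /gcdz (eqP (coprime_num_den vx)) in huv.
exists (u * t); apply: val_inj => /=.
rewrite qzvalMz -/vx.
have dnz : (denq vx)%:~R != 0 :> rat by rewrite intr_eq0 denq_neq0.
have e1 : vx * (u * t)%:~R = vy - (v * t)%:~R.
  have ex : vx = (numq vx)%:~R / (denq vx)%:~R by rewrite numqE mulfK.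
  have ey : vy = t%:~R / (denq vx)%:~R by rewrite -hy NR mulfK.
  have hnu : (numq vx)%:~R * u%:~R = 1 - v%:~R * (denq vx)%:~R :> rat.
    by apply/eqP; rewrite eq_sym subr_eq -!intrM -intrD mulrC huv.
  rewrite ey {1}ex !intrM; apply: (@mulIf _ ((denq vx)%:~R)) => //.
  have -> : (numq vx)%:~R / (denq vx)%:~R * (u%:~R * t%:~R) * (denq vx)%:~R =
            (numq vx)%:~R * u%:~R * t%:~R :> rat by field.
  by rewrite hnu; field.
by rewrite e1 -intrN fracDz frac_id // qzvalP.
Qed.

Section QZEmbedding.
Variable A : zmodType.

(* The image of [x = a/n] (for [x] of order dividing [n]) is [y *~ a]. *)
Definition qz_embed (y : A) n (x : QZ) : A := y *~ Num.floor (qzval x * n%:R).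

Lemma qz_embedD (y : A) n (x x' : QZ) : y *+ n = 0 -> x *+ n = 0 -> x' *+ n = 0 ->
  qz_embed y n (x + x') = qz_embed y n x + qz_embed y n x'.
Proof.
move=> hy /qz_mulrn_eq0 ex /qz_mulrn_eq0 ex'; rewrite /qz_embed.
set ix := Num.floor (qzval x * n%:R) in ex *.
set ix' := Num.floor (qzval x' * n%:R) in ex' *.
have -> : qzval (x + x') * n%:R = (ix + ix' - Num.floor (qzval x + qzval x') * n%:Z)%:~R.
  by rewrite [qzval _]/= /frac mulrBl mulrDl ex ex' !intrD intrN intrM.
by rewrite intrKfloor mulrzBr mulrzDr -mulrzA_C -pmulrn hy mul0rz subr0.
Qed.

Lemma qz_embedMn (y : A) n k (x : QZ) : x *+ n = 0 ->
  qz_embed (y *+ k) n x = qz_embed y (n * k) x.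
Proof.
move=> /qz_mulrn_eq0 ex; rewrite /qz_embed natrM mulrA.
set ix := Num.floor (qzval x * n%:R) in ex *.
rewrite ex -[k%:R]/((k%:Z)%:~R) -intrM intrKfloor.
by rewrite pmulrn -mulrzA mulrC.
Qed.

Lemma qz_embed_inj (y : A) n (x : QZ) : (0 < n)%N ->
  (forall i, y *~ i = 0 -> (n %| `|i|)%N) -> x *+ n = 0 -> qz_embed y n x = 0 -> x = 0.
Proof.
move=> n0 ord /qz_mulrn_eq0 ex /ord; rewrite /qz_embed.
set ix := Num.floor (qzval x * n%:R) in ex *.
have [x0 x1] := andP (qzvalP x).
have nR : (0 : rat) < n%:R by rewrite ltr0n.
have ix0 : (0 <= ix)%R by rewrite -(ler0z rat) -ex mulr_ge0 // ltW.
have ixn : (ix < n%:Z)%R.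
  by rewrite -(ltr_int rat) -ex -[X in _ < X]mul1r ltr_pM2r.
case: ix ix0 ixn ex => // i _ /= ilt ex hd; rewrite ltz_nat in ilt.
have i0 : i = 0%N.
  by apply/eqP; apply: contraT; rewrite -lt0n => /dvdn_leq /(_ hd); rewrite leqNgt ilt.
have /eqP : qzval x * n%:R = 0 by rewrite ex i0.
by rewrite mulf_eq0 pnatr_eq0 (gtn_eqF n0) orbF => /eqP /qz_eq0.
Qed.

Lemma qz_embed_onto (y : A) n (j : int) : (0 < n)%N -> y *+ n = 0 ->
  let x := qz_of (j%:~R / n%:R) in x *+ n = 0 /\ qz_embed y n x = y *~ j.
Proof.
move=> n0 hy x.
have nz : (n%:R : rat) != 0 by rewrite pnatr_eq0 -lt0n.
set f := Num.floor (j%:~R / n%:R : rat).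
have e : qzval x * n%:R = (j - f * n%:Z)%:~R.
  by rewrite /x /= /frac -/f intrB intrM mulrBl mulfVK.
split; first exact: (qz_mulrn_int_eq0 e).
by rewrite /qz_embed e intrKfloor mulrzBr mulrC mulrzA -pmulrn hy mul0rz subr0.
Qed.

End QZEmbedding.

Section PruferEmbedding.
Variables (A : zmodType) (p : nat) (c : nat -> A).
Hypotheses (pp : prime p) (hc : forall n, c n.+1 *+ p = c n).
Hypotheses (hc0 : c 0%N *+ p = 0) (c0 : c 0%N <> 0).

Let cpow n : c n *+ p ^ n = c 0%N.
Proof. by rewrite (chain_mulrn (s := fun _ => p) hc 0 n) chain_factor_const. Qed.

Let c_order n : c n *+ p ^ n.+1 = 0.
Proof. by rewrite expnSr mulrnA cpow. Qed.

Definition prufer_level (x : QZ) :=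
  if pselect (exists K, x *+ p ^ K.+1 = 0) is left h then sval (cid h) else 0%N.

Definition prufer_embed (x : QZ) :=
  qz_embed (c (prufer_level x)) (p ^ (prufer_level x).+1) x.

Lemma qz_embed_chain K t x : x *+ p ^ K.+1 = 0 ->
  qz_embed (c K) (p ^ K.+1) x = qz_embed (c (K + t)%N) (p ^ (K + t).+1) x.
Proof.
move=> hx; elim: t => [|t IH]; first by rewrite addn0.
rewrite IH addnS -[c (K + t)%N]hc qz_embedMn -?expnSr //.
by rewrite -addSn expnD mulrnA hx mul0rn.
Qed.

Lemma prufer_embedE K x : x *+ p ^ K.+1 = 0 ->
  prufer_embed x = qz_embed (c K) (p ^ K.+1) x.
Proof.
move=> hx; rewrite /prufer_embed /prufer_level; case: pselect => [h|[]]; last by exists K.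
have hK := svalP (cid h); move: (sval (cid h)) hK => K' hK.
by rewrite (qz_embed_chain K hK) (qz_embed_chain K' hx) addnC.
Qed.

Lemma prufer_embedD : additive_on (prufer_QZ p) prufer_embed.
Proof.
move=> x y [a ha] [b hb].
have hx : x *+ p ^ (a + b).+1 = 0.
  by rewrite -addSn expnD mulrnA expnSr mulrnA ha !mul0rn.
have hy : y *+ p ^ (a + b).+1 = 0 by rewrite -addSn expnD mulnC mulrnA hb !mul0rn.
have hxy : (x + y) *+ p ^ (a + b).+1 = 0 by rewrite mulrnDl hx hy addr0.
by rewrite (prufer_embedE hx) (prufer_embedE hy) (prufer_embedE hxy) qz_embedD.
Qed.

Lemma prufer_embed_inj x : prufer_QZ p x -> prufer_embed x = 0 -> x = 0.
Proof.
move=> [a ha]; have hx : x *+ p ^ a.+1 = 0 by rewrite expnSr mulrnA ha mul0rn.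
rewrite (prufer_embedE hx); apply: qz_embed_inj hx; first by rewrite expn_gt0 prime_gt0.
by move=> i; apply: order_ppow_dvd pp (c_order a) _; rewrite /= cpow.
Qed.

Lemma prufer_embed_onto n (j : int) :
  exists x, prufer_QZ p x /\ prufer_embed x = c n *~ j.
Proof.
have p0 : (0 < p ^ n.+1)%N by rewrite expn_gt0 prime_gt0.
have [hx he] := qz_embed_onto j p0 (c_order n).
exists (qz_of (j%:~R / (p ^ n.+1)%:R)).
by split; [exists n.+1 | rewrite (prufer_embedE hx)].
Qed.

End PruferEmbedding.

(** * Torsion groups as direct sums of primary components *)

Lemma sub_isomorphic_sym (A B : zmodType) (S : A -> Prop) (T : B -> Prop) :
  is_subgroup S -> sub_isomorphic S T -> sub_isomorphic T S.
Proof.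
move=> sS [f [af [fT [finj fsurj]]]].
pose g b := if pselect (exists a, S a /\ f a = b) is left h then sval (cid h) else 0.
have gP b : T b -> S (g b) /\ f (g b) = b.
  move=> Tb; rewrite /g; case: pselect => [h|nh]; first exact: svalP (cid h).
  by case: nh; apply: fsurj.
exists g; split.
  move=> b b' Tb Tb'; have [Sb fb] := gP b Tb; have [Sb' fb'] := gP b' Tb'.
  have Tbb : T (b + b') by rewrite -fb -fb' -af //; apply: fT; apply: subgroupD.

  have [S1 f1] := gP _ Tbb.
  by apply: finj => //; [apply: subgroupD | rewrite f1 af // fb fb'].
split; first by move=> b Tb; case: (gP b Tb).
split; first by move=> b b' Tb Tb' e; rewrite -(gP b Tb).2 -(gP b' Tb').2 e.
move=> a Sa; exists (f a); split; first exact: fT.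
by have [S1 f1] := gP _ (fT a Sa); apply: finj.
Qed.

Lemma funB (G : zmodType) (F F' : nat -> G) q : (F - F') q = F q - F' q.
Proof. by []. Qed.

Lemma ext_dsum_subgroup (G : zmodType) (P : set nat) (H : nat -> G -> Prop) :
  (forall p, P p -> is_subgroup (H p)) -> is_subgroup (ext_dsum P H).
Proof.
move=> sH; split; first by split=> //; split=> [p Pp|]; [exact: subgroup0 (sH p Pp) | exists 0%N].
move=> F G' [F1 [F2 [NF hNF]]] [G1 [G2 [NG hNG]]]; split.
  by move=> p nP; rewrite funB F1 // G1 // subrr.
split; first by move=> p Pp; rewrite funB; apply: subgroupB (sH p Pp) _ _; [apply: F2 | apply: G2].
exists (maxn NF NG) => p hp; rewrite funB hNF ?hNG ?subrr //.
  exact: leq_trans (leq_maxr _ _) hp.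
exact: leq_trans (leq_maxl _ _) hp.
Qed.

Lemma funMz (G : zmodType) (F : nat -> G) (c : int) q : (F *~ c) q = F q *~ c.
Proof. by case: c => n; rewrite ?NegzE ?mulrNz -!pmulrn natmulfctE. Qed.

Lemma ext_dsum_torsion (P : set nat) (H : nat -> QZ -> Prop) F : ext_dsum P H F ->
  exists m, (0 < m)%N /\ F *+ m = 0.
Proof.
move=> [_ [_ [N hN]]].
have h M : exists m, (0 < m)%N /\ forall q, (q < M)%N -> F q *+ m = 0.
  elim: M => [|M [m [m0 hm]]]; first by exists 1%N.
  have [e [e0 he]] := qz_torsion (F M).
  exists (m * e)%N; split; first by rewrite muln_gt0 m0.
  move=> q; rewrite ltnS leq_eqVlt => /orP [/eqP ->|hq].
    by rewrite mulnC mulrnA he mul0rn.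
  by rewrite mulrnA hm // mul0rn.
have [m [m0 hm]] := h N; exists m; split => //.
apply: funext => q; rewrite natmulfctE; case: (ltnP q N) => hq; first exact: hm.
by rewrite hN // mul0rn.
Qed.

Section PrimaryDecomposition.
Variable A : zmodType.

Lemma torsion_primary_ind (S Q : A -> Prop) : is_subgroup S -> Q 0 ->
  (forall a b, S a -> S b -> Q a -> Q b -> Q (a + b)) ->
  (forall p s t, prime p -> S t -> t *+ p ^ s = 0 -> Q t) ->
  forall m t, (0 < m)%N -> S t -> t *+ m = 0 -> Q t.
Proof.
move=> sS Q0 QD Qp; elim/ltn_ind => m IH t m0 St ht.
case: (ltngtP m 1) => [|m1|m1].
- by rewrite ltnNge m0.
- have pp := pdiv_prime m1; set p := pdiv m in pp.
  have [k' cpk hk] := pfactor_coprime pp m0; set l := logn p m in hk.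
  have l0 : (0 < l)%N by rewrite /l logn_gt0 mem_primes pp m0 pdiv_dvd.
  have k0 : (0 < k')%N by move: m0; rewrite hk muln_gt0 => /andP [].
  have km : (k' < m)%N.
    rewrite [in X in (_ < X)%N]hk -[X in (X < _)%N]muln1 ltn_pmul2l //.
    by rewrite -(expn0 p) ltn_exp2l ?prime_gt1.
  have [u [v huv]] := Bezoutz k'%:Z (p ^ l)%:Z.
  have cop : coprime k' (p ^ l) by rewrite coprimeXr // coprime_sym.
  rewrite /gcdz /= (eqP cop) in huv.
  have -> : t = t *~ (u * k'%:Z) + t *~ (v * (p ^ l)%:Z).
    by rewrite -mulrzDr huv mulr1z.
  have hmz : t *~ m%:Z = 0 by rewrite -pmulrn.
  apply: QD; [exact: subgroupMz | exact: subgroupMz | |].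
    apply: (Qp p l) => //; first exact: subgroupMz.
    by rewrite pmulrn -mulrzA -mulrA -PoszM -hk (mulrC u) mulrzA hmz mul0rz.
  apply: (IH k') => //; first exact: subgroupMz.
  by rewrite pmulrn -mulrzA -mulrA -PoszM mulnC -hk (mulrC v) mulrzA hmz mul0rz.
- by rewrite m1 mulr1n in ht; rewrite ht.
Qed.

Definition primary_at q (z : A) := z = 0 \/ (prime q /\ exists s, z *+ q ^ s = 0).

Lemma primary_sum_ann (y : nat -> A) N r : (N <= r)%N -> prime r ->
  (forall q, (q < N)%N -> primary_at q (y q)) ->
  exists M, coprime M r /\ (\sum_(0 <= q < N) y q) *+ M = 0.
Proof.
elim: N => [|N IH] Nr pr hy.
  by exists 1%N; split; [exact: coprime1n | rewrite big_geq // mul0rn].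
have [M0 [cM0 hM0]] := IH (ltnW Nr) pr (fun q hq => hy q (ltnW hq)).
rewrite big_nat_recr //=.
case: (hy N (ltnSn N)) => [->|[pN [s hs]]]; first by exists M0; rewrite addr0.
exists (M0 * N ^ s)%N; split.
  rewrite coprimeMl cM0 /= coprimeXl // coprime_sym prime_coprime //.
  by apply/negP => /(dvdn_leq (prime_gt0 pN)); rewrite leqNgt Nr.
by rewrite mulrnDl mulrnA hM0 mul0rn add0r mulnC mulrnA hs mul0rn.
Qed.

Lemma primary_sum_eq0 (y : nat -> A) N :
  (forall q, (q < N)%N -> primary_at q (y q)) ->
  \sum_(0 <= q < N) y q = 0 -> forall q, (q < N)%N -> y q = 0.
Proof.
elim: N => [|N IH] hy hs q //.
have hy' q' : (q' < N)%N -> primary_at q' (y q') by move=> h; apply: hy; apply: ltnW.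
move: hs; rewrite big_nat_recr //= => hs.
have yN : y N = 0.
  case: (hy N (ltnSn N)) => [//|[pN [s hsN]]].
  have [M [cM hM]] := primary_sum_ann (leqnn N) pN hy'.
  apply: (mulrn_coprime_eq0 hsN (b := M)); last by rewrite coprimeXl // coprime_sym.
  have -> : y N = - \sum_(0 <= q < N) y q by apply/eqP; rewrite -addr_eq0 addrC hs.
  by rewrite mulNrn hM oppr0.
rewrite yN addr0 in hs.
by rewrite ltnS leq_eqVlt => /orP [/eqP ->|]; [exact: yN | exact: IH].
Qed.

Lemma sum_nat_supp (g : nat -> A) N1 N2 : (forall q, (N1 <= q)%N -> g q = 0) ->
  (forall q, (N2 <= q)%N -> g q = 0) ->
  \sum_(0 <= q < N1) g q = \sum_(0 <= q < N2) g q.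
Proof.
wlog le12 : N1 N2 / (N1 <= N2)%N.
  move=> W h1 h2; case: (leqP N1 N2) => [le|lt]; first exact: W.
  by symmetry; apply: W => //; apply: ltnW.
move=> h1 _; rewrite [RHS](big_cat_nat (n := N1)) //=.
have -> : \sum_(N1 <= i < N2) g i = 0.
  by rewrite big_nat_cond big1 // => i /andP [/andP [hi _] _]; apply: h1.
by rewrite addr0.
Qed.

End PrimaryDecomposition.

Section DsumIso.
Variables (A : zmodType) (S : A -> Prop) (P : set nat) (H : nat -> QZ -> Prop).
Variable phi : nat -> QZ -> A.
Hypotheses (sS : is_subgroup S) (Pprime : set_of_primes P).
Hypothesis S_torsion : forall z, S z -> exists m, (0 < m)%N /\ z *+ m = 0.
Hypothesis sH : forall p, P p -> is_subgroup (H p).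
Hypothesis H_primary : forall p, P p -> forall x, H p x -> exists s, x *+ p ^ s = 0.
Hypothesis phiD : forall p, P p -> additive_on (H p) (phi p).
Hypothesis phiS : forall p, P p -> forall x, H p x -> S (phi p x).
Hypothesis phi_inj : forall p, P p -> forall x, H p x -> phi p x = 0 -> x = 0.
Hypothesis phi_onto : forall p s z, prime p -> S z -> z *+ p ^ s = 0 ->
  z = 0 \/ (P p /\ exists x, H p x /\ phi p x = z).

Let phiP q x := if pselect (P q) is left _ then phi q x else 0.

Let phiPE q x : P q -> phiP q x = phi q x.
Proof. by rewrite /phiP; case: pselect. Qed.

Let phiPN q x : ~ P q -> phiP q x = 0.
Proof. by rewrite /phiP; case: pselect. Qed.

Let phiPD q F G : ext_dsum P H F -> ext_dsum P H G ->
  phiP q ((F + G) q) = phiP q (F q) + phiP q (G q).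
Proof.
move=> [_ [eF _]] [_ [eG _]]; rewrite -[(F + G) q]/(F q + G q).
have [Pq|Pq] := pselect (P q).
  by rewrite !phiPE //; apply: (phiD Pq); [exact: eF | exact: eG].
by rewrite !phiPN // addr0.
Qed.

Let supp_bound (F : nat -> QZ) :=
  if pselect (exists N, forall q, (N <= q)%N -> F q = 0) is left h then sval (cid h) else 0%N.

Let dsum_map F := \sum_(0 <= q < supp_bound F) phiP q (F q).

Let dsum_mapE F N : ext_dsum P H F -> (forall q, (N <= q)%N -> F q = 0) ->
  dsum_map F = \sum_(0 <= q < N) phiP q (F q).
Proof.
move=> [_ [_ hex]] hN; rewrite /dsum_map /supp_bound; case: pselect => [h|//].
apply: sum_nat_supp => q hq; last by rewrite hN // /phiP; case: pselect => // Pq; exact: additive_on0 (sH Pq) (phiD Pq).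
by rewrite (svalP (cid h) q hq) /phiP; case: pselect => // Pq; exact: additive_on0 (sH Pq) (phiD Pq).
Qed.

Let dsum_mapD F G : ext_dsum P H F -> ext_dsum P H G ->
  dsum_map (F + G) = dsum_map F + dsum_map G.
Proof.
move=> eF eG; have [_ [_ [NF hNF]]] := eF; have [_ [_ [NG hNG]]] := eG.
have hF q : (maxn NF NG <= q)%N -> F q = 0.
  by move=> hq; apply: hNF; exact: leq_trans (leq_maxl _ _) hq.
have hG q : (maxn NF NG <= q)%N -> G q = 0.
  by move=> hq; apply: hNG; exact: leq_trans (leq_maxr _ _) hq.
have eFG : ext_dsum P H (F + G) by apply: subgroupD (ext_dsum_subgroup sH) eF eG.
rewrite (dsum_mapE (N := maxn NF NG) eFG); last first.
  by move=> q hq; rewrite addrfctE /= hF ?hG ?addr0.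
rewrite (dsum_mapE eF hF) (dsum_mapE eG hG) -big_split /=.
by apply: eq_bigr => q _; apply: phiPD.
Qed.

Let dsum_mapS F : ext_dsum P H F -> S (dsum_map F).
Proof.
move=> eF; apply: (big_ind S); [exact: subgroup0 | by move=> *; apply: subgroupD |].
move=> q _; have [Pq|Pq] := pselect (P q); last by rewrite phiPN //; exact: subgroup0.
by rewrite phiPE //; apply: phiS => //; apply: eF.2.1.
Qed.

Let dsum_map_eq0 F : ext_dsum P H F -> dsum_map F = 0 -> F = 0.
Proof.
move=> eF; have [F1 [F2 [N hN]]] := eF; rewrite (dsum_mapE eF hN) => h0.
have hy q : (q < N)%N -> primary_at q (phiP q (F q)).
  move=> _; have [Pq|Pq] := pselect (P q); last by left; rewrite phiPN.
  right; split; first exact: Pprime.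
  have [s hs] := H_primary Pq (F2 q Pq); exists s.
  by rewrite phiPE // -(additive_onMn (sH Pq) (phiD Pq) _ (F2 q Pq)) hs (additive_on0 (sH Pq) (phiD Pq)).
have hz := primary_sum_eq0 hy h0.
apply: funext => q; case: (ltnP q N) => hq; last exact: hN.
have [Pq|Pq] := pselect (P q); last exact: F1.
by apply: (phi_inj Pq (F2 q Pq)); rewrite -phiPE // hz.
Qed.

Let dsum_map_onto z : S z -> exists F, ext_dsum P H F /\ dsum_map F = z.
Proof.
move=> Sz; have [m [m0 hm]] := S_torsion Sz.
have extS := ext_dsum_subgroup sH.
apply: (torsion_primary_ind (Q := fun z => exists F, ext_dsum P H F /\ dsum_map F = z)
  sS _ _ _ m0 Sz hm).
- exists 0; split; first exact: subgroup0 extS.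
  by rewrite (dsum_mapE (N := 0%N) (subgroup0 extS)) ?big_geq.
- move=> a b _ _ [F [eF <-]] [G [eG <-]]; exists (F + G).
  by split; [exact: subgroupD extS eF eG | exact: dsum_mapD].
move=> p s t pp St ht; case: (phi_onto pp St ht) => [->|[Pp [x [Hx <-]]]].
  by exists 0; split; [exact: subgroup0 extS | rewrite (dsum_mapE (N := 0%N) (subgroup0 extS)) ?big_geq].
pose F q := if q == p then x else 0.
have hF q : (p.+1 <= q)%N -> F q = 0.
  by rewrite /F; case: eqP => // -> ; rewrite ltnn.
have eF : ext_dsum P H F.
  split; first by move=> q nPq; rewrite /F; case: eqP => // eq; case: nPq; rewrite eq.
  split; last by exists p.+1.
  by move=> q Pq; rewrite /F; case: eqP => [->//|_]; exact: subgroup0 (sH Pq).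
exists F; split => //; rewrite (dsum_mapE eF hF) big_nat_recr //= big_nat_cond big1 ?add0r.
  by rewrite /F eqxx phiPE.
move=> q /andP [/andP [_ hq] _]; rewrite /F; case: eqP => [eq|_]; last first.
  by rewrite /phiP; case: pselect => // Pq; exact: additive_on0 (sH Pq) (phiD Pq).
by move: hq; rewrite eq ltnn.
Qed.

Lemma primary_dsum_iso : sub_isomorphic S (ext_dsum P H).
Proof.
have extS := ext_dsum_subgroup sH.
apply: (sub_isomorphic_sym extS).
exists dsum_map; split; first exact: dsum_mapD.
split; first exact: dsum_mapS.
split; last exact: dsum_map_onto.
move=> F G eF eG e.
have eFG : ext_dsum P H (F - G) by apply: subgroupB extS eF eG.
have : dsum_map (F - G) = 0.
  by apply: (addIr (dsum_map G)); rewrite add0r -dsum_mapD // subrK e.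
by move/(dsum_map_eq0 eFG)/eqP; rewrite subr_eq0 => /eqP.
Qed.

End DsumIso.

(** * Necessity *)

Lemma cyclic_QZ_subgroup n : is_subgroup (cyclic_QZ n).
Proof.
split; first by rewrite /cyclic_QZ mul0rn.
by move=> x y hx hy; rewrite /cyclic_QZ mulrnBl hx hy subrr.
Qed.

Lemma prufer_QZ_subgroup p : is_subgroup (prufer_QZ p).
Proof.
split; first by exists 0%N; rewrite mul0rn.
move=> x y [a ha] [b hb]; exists (a + b)%N; apply: mulrn_ppowD_eq0 => //.
by rewrite mulNrn hb oppr0.
Qed.

Section PrimaryPart.
Variables (A : zmodType) (R : A -> Prop) (p : nat).
Hypotheses (pp : prime p) (sR : is_subgroup R).

Definition primary_part (x : A) := R x /\ exists s, x *+ p ^ s = 0.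

Definition socle_prime := prime p /\ exists r, [/\ R r, r <> 0 & r *+ p = 0].

Lemma primary_part_subgroup : is_subgroup primary_part.
Proof.
split; first by split; [exact: subgroup0 | exists 0%N; rewrite mul0rn].
move=> x y [Rx [s hs]] [Ry [s' hs']]; split; first exact: subgroupB.
by exists (s + s')%N; apply: mulrn_ppowD_eq0 => //; rewrite mulNrn hs' oppr0.
Qed.

Hypothesis socle_height : forall a, R a -> a *+ p = 0 ->
  forall n, exists z, R z /\ a = z *+ p ^ n.

Lemma primary_part_divp s x : R x -> x *+ p ^ s = 0 ->
  exists y, primary_part y /\ x = y *+ p.
Proof.
elim: s x => [|s IH] x Rx hx.
  rewrite expn0 mulr1n in hx; rewrite hx; exists 0; rewrite mul0rn.
  by split => //; apply: subgroup0 primary_part_subgroup.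
have hxp : (x *+ p ^ s) *+ p = 0 by rewrite -mulrnA -expnSr.
have [z [Rz hz]] := socle_height (subgroupMn _ sR Rx) hxp s.+1.
have hxz : (x - z *+ p) *+ p ^ s = 0 by rewrite mulrnBl -mulrnA -expnS -hz subrr.
have [w [[Rw [sw hw]] hxw]] := IH _ (subgroupB sR Rx (subgroupMn _ sR Rz)) hxz.
exists (z + w); split; last by rewrite mulrnDl -hxw subrKC.
split; first exact: subgroupD.
exists (s.+2 + sw)%N; apply: mulrn_ppowD_eq0 => //.
by rewrite expnS mulnC mulrnA -hz -mulrnA -expnSr.
Qed.

Lemma primary_part_divisible : divisible_sub primary_part.
Proof.
split; first exact: primary_part_subgroup.
move=> x n Rpx n0; have [k cpk hn] := pfactor_coprime pp n0.
have [u hu] := coprime_ppow_div (svalP (cid Rpx.2)) cpk.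
have Rpy : primary_part (x *~ u).
  have [Rx [s hs]] := Rpx; split; first exact: subgroupMz.
  by exists s; rewrite pmulrn mulrzAC -pmulrn hs mul0rz.
have [y [Rpy' hy]] : exists y, primary_part y /\ x *~ u = y *+ p ^ logn p n.
  elim: (logn p n) => [|l [y [[Ry [s hs]] ->]]]; first by exists (x *~ u); rewrite mulr1n.
  have [y' [Rpy' ->]] := primary_part_divp Ry hs.
  by exists y'; split => //; rewrite -mulrnA -expnS.
by exists y; split => //; rewrite hn mulnC mulrnA -hy.
Qed.

End PrimaryPart.

Lemma maximal_height_pure (A : zmodType) (R : A -> Prop) p m (b : A) :
  prime p -> is_subgroup R -> b *+ p ^ m.+1 = 0 ->
  ~ (exists z, R z /\ b *+ p ^ m = z *+ p ^ m.+1) ->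
  forall j z, R z -> b *~ j = z *+ p ^ m.+1 -> b *~ j = 0.
Proof.
move=> pp sR hm Pm j z Rz hj.
have [e le_em ge] := dvdn_pfactor _ _ pp (dvdn_gcdr `|j| (p ^ m.+1)).
have [em|nem] := eqVneq e m.+1.
  by apply: (mulrz_dvd_eq0 hm); rewrite -em -ge dvdn_gcdl.
have lt : (e <= m)%N by rewrite -ltnS ltn_neqAle nem le_em.
have [u [v huv]] := Bezoutz j (p ^ m.+1)%:Z.
have g' : gcdz j (p ^ m.+1)%:Z = (p ^ e)%:Z by rewrite /gcdz /= ge.
have hbe : b *+ p ^ e = (z *~ u) *+ p ^ m.+1.
  rewrite pmulrn -g' -huv mulrzDr (mulrC v) (mulrzA b (p ^ m.+1)%:Z v) -(pmulrn b) hm.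
  by rewrite mul0rz addr0 (mulrC u) (mulrzA b j u) hj pmulrn mulrzAC pmulrn.
case: Pm; exists ((z *~ u) *+ p ^ (m - e)).
split; first by apply: subgroupMn => //; apply: subgroupMz.
have -> : b *+ p ^ m = (b *+ p ^ e) *+ p ^ (m - e) by rewrite -mulrnA -expnD subnKC.
by rewrite hbe -!mulrnA mulnC.
Qed.

Definition summand_structure (A : zmodType) (D R : A -> Prop) :=
  exists (P' : set nat) (k : nat -> nat),
    set_of_primes P' /\ (forall p, P' p -> (0 < k p)%N) /\
    sub_isomorphic R (ext_dsum P' (fun p => cyclic_QZ (p ^ k p))) /\
    (sub_isomorphic D (fun _ : rat => True) \/
     exists P'' : set nat,
       set_of_primes P'' /\ (forall p, P' p -> ~ P'' p) /\
       sub_isomorphic D (ext_dsum P'' prufer_QZ)).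

Section Forward.
Variables (A : zmodType) (D R : A -> Prop) (pi : A -> A).
Hypotheses (Dpart : is_divisible_part D) (sR : is_subgroup R).
Hypotheses (CE : End_centrally_essential A) (nzD : nonzero_sub D).
Hypotheses (epi : is_endo pi) (piD : forall a, D (pi a)) (piR : forall a, R (a - pi a)).
Hypotheses (piDd : forall d, D d -> pi d = d) (piRr : forall r, R r -> pi r = 0).

Let dD : divisible_sub D := Dpart.1.
Let sD : is_subgroup D := dD.1.

Let pi_idem z : pi (pi z) = pi z.
Proof. exact: piDd. Qed.

Lemma D_ann_R_eq0 r d : R r -> D d -> (forall i, r *~ i = 0 -> d *~ i = 0) -> d = 0.
Proof.
move=> Rr Dd ann; have [f [ef _ fr]] := divisible_hom_multiples dD Dd ann.
by rewrite -(piDd Dd) -fr (CE_idempotent_central CE epi pi_idem ef) piRr // endo0.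
Qed.

Lemma R_torsion r : R r -> exists m, (0 < m)%N /\ r *+ m = 0.
Proof.
move=> Rr; apply: contrapT => nt; have [d [Dd]] := nzD; apply.
apply: (D_ann_R_eq0 Rr Dd) => i /mulrz_eq0_abs h.
have [/eqP|ip] := posnP `|i|%N; first by rewrite absz_eq0 => /eqP ->; rewrite mulr0z.
by case: nt; exists `|i|%N.
Qed.

Lemma R_socle_D_eq0 p d : socle_prime R p -> D d -> d *+ p = 0 -> d = 0.
Proof.
move=> [pp [r [Rr rn rp]]] Dd dp; apply: (D_ann_R_eq0 Rr Dd) => i hi.
apply: (mulrz_dvd_eq0 dp).
by have := @order_ppow_dvd _ p 1 r i pp; rewrite expn1 /= expn0 mulr1n; apply.
Qed.

Lemma R_finite_height p : socle_prime R p ->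
  exists a, [/\ R a, a <> 0, a *+ p = 0 & exists n, ~ exists z, R z /\ a = z *+ p ^ n].
Proof.
move=> [pp [r [Rr rn rp]]]; apply: contrapT => nH; apply: rn.
have height a : R a -> a *+ p = 0 -> forall n, exists z, R z /\ a = z *+ p ^ n.
  move=> Ra pa n; have [->|an] := pselect (a = 0).
    by exists 0; split; [exact: subgroup0 | rewrite mul0rn].
  by apply: contrapT => hn; apply: nH; exists a; split => //; exists n.
have Dr : D r.
  apply: Dpart.2 (primary_part_divisible pp sR height) _ _.
  by split => //; exists 1%N; rewrite expn1.
by rewrite -(piDd Dr) piRr.
Qed.

Lemma R_primary_cyclic p : socle_prime R p ->
  exists b m, [/\ R b, (0 < m)%N, b *+ p ^ m = 0, b *+ p ^ m.-1 <> 0 &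
     forall z s, z *+ p ^ s = 0 -> multiples b z].
Proof.
move=> Rp; have pp := Rp.1; have [a [Ra an ap [n hn]]] := R_finite_height Rp.
pose P k := `[< ~ exists z, R z /\ a = z *+ p ^ k >].
have [m /asboolP Pm mmin] := ex_minnP (ex_intro P n (asboolT hn)).
case: m Pm mmin => [|m] Pm mmin; first by case: Pm; exists a; rewrite expn0 mulr1n.
have [b [Rb hab]] : exists b, R b /\ a = b *+ p ^ m.
  apply: contrapT => hnz; have /mmin : P m by apply/asboolP.
  by rewrite ltnn.
have hm : b *+ p ^ m.+1 = 0 by rewrite expnSr mulrnA -hab.
have pure j z : b *~ j = z *+ p ^ m.+1 -> b *~ j = 0.
  move=> hj; apply: (maximal_height_pure pp sR hm _ (piR z)); first by rewrite -hab.
  have Rbj : R (b *~ j) by apply: subgroupMz.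
  by rewrite -[LHS]subr0 -(piRr Rbj) hj (endoMn _ _ epi) mulrnBl.
have hm1 : b *+ p ^ m.+1.-1 <> 0 by rewrite /= -hab.
have [e [ee Te eb]] := pure_cyclic_projection pp hm hm1 pure.
exists b, m.+1; split => //.
exact: (CE_cyclic_summand_absorbs CE pp hm hm1 ee Te eb).
Qed.

Lemma R_iso : exists k : nat -> nat, (forall p, socle_prime R p -> (0 < k p)%N) /\
  sub_isomorphic R (ext_dsum (socle_prime R) (fun p => cyclic_QZ (p ^ k p))).
Proof.
pose gen p (bm : A * nat) := [/\ R bm.1, (0 < bm.2)%N, bm.1 *+ p ^ bm.2 = 0,
   bm.1 *+ p ^ bm.2.-1 <> 0 & forall z s, z *+ p ^ s = 0 -> multiples bm.1 z].
pose pick p := if pselect (exists bm, gen p bm) is left h then sval (cid h) else (0, 0%N).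
have pickP p : socle_prime R p -> gen p (pick p).
  move=> Rp; rewrite /pick; case: pselect => [h|[]]; first exact: svalP (cid h).
  by have [b [m hbm]] := R_primary_cyclic Rp; exists (b, m).
exists (fun p => (pick p).2); split; first by move=> p /pickP [].
apply: (primary_dsum_iso (phi := fun p => qz_embed (pick p).1 (p ^ (pick p).2))) => //.
- by move=> p [].
- exact: R_torsion.
- by move=> p _; apply: cyclic_QZ_subgroup.
- by move=> p _ x hx; exists (pick p).2.
- by move=> p Rp x y hx hy; have [_ _ hm _ _] := pickP p Rp; apply: qz_embedD.
- by move=> p Rp x _; have [Rb _ _ _ _] := pickP p Rp; apply: subgroupMz.
- move=> p Rp x hx; have [_ m0 hm hm1 _] := pickP p Rp.
  apply: qz_embed_inj hx; first by rewrite expn_gt0 prime_gt0 //; case: Rp.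
  by move=> i; apply: order_ppow_dvd Rp.1 hm hm1.
move=> p s z pp Rz hz; have [->|nz] := pselect (z = 0); [by left | right].
have Rp : socle_prime R p.
  split => //; have [t [wn wp]] := ppow_socle nz hz.
  by exists (z *+ p ^ t); split => //; apply: subgroupMn.
split => //; have [Rb m0 hm hm1 hc] := pickP p Rp.
have [j ->] := hc z s hz.
have p0 : (0 < p ^ (pick p).2)%N by rewrite expn_gt0 prime_gt0.
have [hx he] := qz_embed_onto j p0 hm.
by exists (qz_of (j%:~R / (p ^ (pick p).2)%:R)).
Qed.

Lemma D_rank1_iso x : D x -> (forall i, x *~ i = 0 -> i = 0) ->
  sub_isomorphic D (fun _ : rat => True).
Proof.
move=> Dx xfree.
have [c [c0 cP cD dC]] := rank1_divisible_hull dD Dx.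
have [e [ee Te he]] := divisible_projection dC.
have Tx : chain_span c x by exists 0%N, 1; rewrite mulr1z.
have absorb z : D z -> chain_span c z.
  move=> Dz; suff /eqP : z - e z = 0 by rewrite subr_eq0 => /eqP ->.
  apply: (CE_divisible_summand_ann CE dD ee Te he Tx).
  - exact: subgroupB sD Dz (cD _ (Te z)).
  - by rewrite (endoB _ _ ee) (he _ (Te z)) subrr.
  - by move=> i /xfree ->; rewrite mulr0z.
apply: (rank1_iso_Q xfree dD Dx).
  move=> z /absorb [n [j ->]]; have [P [P0 hP]] := cP n.
  by exists P, j; split => //; rewrite pmulrn mulrzAC -pmulrn hP.
move=> z m /absorb [n [j ->]] m0 hz; have [P [P0 hP]] := cP n.
have : x *~ (j * m%:Z) = 0.
  have hz' : c n *~ (j * m%:Z) = 0 by rewrite mulrzA -pmulrn hz.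
  by rewrite -hP pmulrn -mulrzA mulrC mulrzA hz' mul0rz.
move/xfree/eqP; rewrite mulf_eq0 => /orP [/eqP ->|]; first by rewrite mulr0z.
by rewrite eqz_nat => /eqP m00; move: m0; rewrite m00.
Qed.

Lemma D_prufer_chain p : socle_prime D p ->
  exists c, [/\ c 0%N <> 0, c 0%N *+ p = 0, (forall n, D (c n)),
    (forall n, c n.+1 *+ p = c n) & forall z s, D z -> z *+ p ^ s = 0 -> chain_span c z].
Proof.
move=> [pp [d [Dd nd hd]]].
have [c [c0 Dc hc cpow dC]] := prufer_divisible_hull pp dD Dd hd.
exists c; rewrite c0; split => // z s Dz hz.
have [e [ee Te he]] := divisible_projection dC.
have Td : chain_span c d by exists 0%N, 1; rewrite mulr1z c0.
have [h|h] := pselect (z - e z = 0); first by move/eqP: h; rewrite subr_eq0 => /eqP ->.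
have [n [j hj]] := Te z.
have hw : (z - e z) *+ p ^ (s + n.+1) = 0.
  apply: mulrn_ppowD_eq0 => //; rewrite mulNrn hj pmulrn mulrzAC -pmulrn.
  by rewrite expnSr mulrnA cpow hd mul0rz oppr0.
have [t [wn wp]] := ppow_socle h hw.
case: wn; apply: (CE_divisible_summand_ann CE dD ee Te he Td).
- by apply: subgroupMn => //; apply: subgroupB sD Dz _; have [n' [j' ->]] := Te z; apply: subgroupMz.
- by rewrite (endoMn _ _ ee) (endoB _ _ ee) (he _ (Te z)) subrr mul0rn.
- move=> i hi; apply: (mulrz_dvd_eq0 wp).
  by have := @order_ppow_dvd _ p 1 d i pp; rewrite expn1 /= expn0 mulr1n; apply.
Qed.

Lemma D_prufer_iso : (forall z, D z -> exists m, (0 < m)%N /\ z *+ m = 0) ->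
  sub_isomorphic D (ext_dsum (socle_prime D) prufer_QZ).
Proof.
move=> torD.
pose chain p c := [/\ c 0%N <> 0, c 0%N *+ p = 0, (forall n, D (c n)),
   (forall n, c n.+1 *+ p = c n) & forall z s, D z -> z *+ p ^ s = 0 -> chain_span c z].
pose pch p := if pselect (exists c, chain p c) is left h then sval (cid h) else fun _ => 0.
have pchP p : socle_prime D p -> chain p (pch p).
  move=> Dp; rewrite /pch; case: pselect => [h|[]]; first exact: svalP (cid h).
  exact: D_prufer_chain.
apply: (primary_dsum_iso (phi := fun p => prufer_embed p (pch p))) => //.
- by move=> p [].
- by move=> p _; apply: prufer_QZ_subgroup.
- by move=> p Dp; have [_ h0 _ hc _] := pchP p Dp; apply: prufer_embedD.
- by move=> p Dp x _; have [_ _ Dc _ _] := pchP p Dp; apply: subgroupMz.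
- by move=> p Dp; have [c0 h0 _ hc _] := pchP p Dp; apply: prufer_embed_inj; case: Dp.
move=> p s z pp Dz hz; have [->|nz] := pselect (z = 0); [by left | right].
have Dp : socle_prime D p.
  split => //; have [t [wn wp]] := ppow_socle nz hz.
  by exists (z *+ p ^ t); split => //; apply: subgroupMn.
split => //; have [_ h0 _ hc span] := pchP p Dp.
by have [n [j ->]] := span z s Dz hz; exact: (prufer_embed_onto pp hc h0 n j).
Qed.

Lemma D_iso : sub_isomorphic D (fun _ : rat => True) \/
  exists P'' : set nat, set_of_primes P'' /\ (forall p, socle_prime R p -> ~ P'' p) /\
    sub_isomorphic D (ext_dsum P'' prufer_QZ).
Proof.
have [[x [Dx xinf]]|tor] := pselect (exists x, D x /\ forall m, (0 < m)%N -> x *+ m <> 0).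
  left; apply: (D_rank1_iso Dx) => i /mulrz_eq0_abs h.
  by apply/eqP; rewrite -absz_eq0; have [//|ip] := posnP `|i|%N; case: (xinf _ ip).
right; exists (socle_prime D); split; first by move=> p [].
split.
  move=> p Rp [_ [d [Dd dn dp]]].
  exact: dn (R_socle_D_eq0 Rp Dd dp).
apply: D_prufer_iso => z Dz; apply: contrapT => h.
by apply: tor; exists z; split => // m m0 hm; apply: h; exists m.
Qed.

Lemma CE_summand_structure : summand_structure D R.
Proof.
have [k [kpos hR]] := R_iso.
exists (socle_prime R), k; split; first by move=> p [].
by do 2!split => //; apply: D_iso.
Qed.

End Forward.

Lemma endo_comm_locally_cyclic (A : zmodType) (t : A) f g :
  (forall w, (forall n, t *+ n = 0 -> w *+ n = 0) -> multiples t w) ->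
  is_endo f -> is_endo g -> f (g t) = g (f t).
Proof.
move=> lc ef eg.
have [cf hf] : multiples t (f t) by apply: lc => n hn; rewrite -endoMn // hn endo0.
have [cg hg] : multiples t (g t) by apply: lc => n hn; rewrite -endoMn // hn endo0.
by rewrite hg endoMz // hf endoMz // hg mulrzAC.
Qed.

Lemma divisible_part_endo_stable (A : zmodType) (D : A -> Prop) f :
  is_divisible_part D -> is_endo f -> forall x, D x -> D (f x).
Proof.
move=> [[sD dD] maxD] ef x Dx.
pose T y := exists x, D x /\ f x = y.
have dT : divisible_sub T.
  split.
    split; first by exists 0; split; [exact: subgroup0 | exact: endo0].
    move=> _ _ [a [Da <-]] [b [Db <-]].
    by exists (a - b); split; [exact: subgroupB | exact: endoB].
  move=> _ n [a [Da <-]] n0; have [b [Db hb]] := dD a n Da n0.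
  by exists (f b); split; [exists b | rewrite -endoMn // hb].
by apply: maxD dT _ _; exists x.
Qed.

Section IsoTransfer.
Variables (A : zmodType) (S : A -> Prop) (P : set nat) (H : nat -> QZ -> Prop).
Variable psi : A -> nat -> QZ.
Hypotheses (sS : is_subgroup S) (psiD : additive_on S psi).
Hypothesis psiE : forall x, S x -> ext_dsum P H (psi x).
Hypothesis psiI : forall x y, S x -> S y -> psi x = psi y -> x = y.
Hypothesis Pprime : set_of_primes P.
Hypothesis H_primary : forall q, P q -> forall x, H q x -> exists j, x *+ q ^ j = 0.

Lemma iso_torsion x : S x -> exists m, (0 < m)%N /\ x *+ m = 0.
Proof.
move=> Sx; have [m [m0 hm]] := ext_dsum_torsion (psiE Sx).
exists m; split => //; apply: psiI; [exact: subgroupMn | exact: subgroup0 |].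
by rewrite (additive_onMn sS psiD) // hm (additive_on0 sS psiD).
Qed.

Lemma iso_component_eq0 x p s : S x -> prime p -> x *+ p ^ s = 0 ->
  forall q, q <> p -> psi x q = 0.
Proof.
move=> Sx pp hx q qp; have [h1 [h2 _]] := psiE Sx.
have [Pq|Pq] := pselect (P q); last exact: h1.
have [j hj] := H_primary Pq (h2 q Pq).
have hp : psi x q *+ p ^ s = 0.
  have := congr1 (fun F => F q) (additive_onMn sS psiD (p ^ s) Sx).
  by rewrite hx (additive_on0 sS psiD) natmulfctE => <-.
apply: (mulrn_coprime_eq0 hj hp).
rewrite coprimeXl // coprimeXr // prime_coprime ?Pprime // dvdn_prime2 //; last exact: Pprime.
exact/eqP.
Qed.

Lemma iso_primary_eq0 x p s : S x -> prime p -> x *+ p ^ s = 0 -> ~ P p -> x = 0.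
Proof.
move=> Sx pp hx nP; apply: psiI => //; first exact: subgroup0.
rewrite (additive_on0 sS psiD); apply: funext => q.
have [->|qp] := eqVneq q p; first by have [h1 _] := psiE Sx; apply: h1.
by apply: (iso_component_eq0 Sx pp hx); apply/eqP.
Qed.

Lemma iso_locally_cyclic t r p s : S t -> S r -> prime p -> t *+ p ^ s = 0 ->
  (forall n, t *+ n = 0 -> r *+ n = 0) -> multiples t r.
Proof.
move=> St Sr pp ht ann.
have zt := iso_component_eq0 St pp ht; have zr := iso_component_eq0 Sr pp (ann _ ht).
have [c hc] : exists c : int, psi r p = psi t p *~ c.
  apply: qz_ann_multiple => n hn.
  have htn : psi t *+ n = 0.
    apply: funext => q; rewrite natmulfctE.
    by have [->//|qp] := eqVneq q p; rewrite zt ?mul0rn //; apply/eqP.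
  have tn0 : t *+ n = 0.
    apply: psiI; [exact: subgroupMn | exact: subgroup0 |].
    by rewrite (additive_onMn sS psiD) // htn (additive_on0 sS psiD).
  have := congr1 (fun F => F p) (congr1 psi (ann _ tn0)).
  by rewrite (additive_onMn sS psiD) // (additive_on0 sS psiD) natmulfctE.
exists c; apply: psiI => //; first exact: subgroupMz.
rewrite (additive_onMz sS psiD) //; apply: funext => q; rewrite funMz.
by have [->//|qp] := eqVneq q p; rewrite zt ?zr ?mul0rz //; apply/eqP.
Qed.

End IsoTransfer.

(** * Sufficiency *)

Lemma End_comm_centrally_essential (A : zmodType) : (exists z : A, z <> 0) ->
  (forall f g : A -> A, is_endo f -> is_endo g -> forall z, f (g z) = g (f z)) ->
  End_centrally_essential A.
Proof.
move=> [z0 nz0] comm a ea [z az]; exists id, a.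
split; first by split.
split; first by split=> // g eg x; exact: (comm a g ea eg x).
by split; [exists z0 | split; [exists z|]].
Qed.

Lemma rank1_torsion_free (A : zmodType) (D : A -> Prop) d m : is_subgroup D ->
  sub_isomorphic D (fun _ : rat => True) -> D d -> (0 < m)%N -> d *+ m = 0 -> d = 0.
Proof.
move=> sD [psi [psiD [_ [psiI _]]]] Dd m0 hd; apply: psiI => //; first exact: subgroup0.
have /eqP := congr1 psi hd; rewrite (additive_onMn sD psiD) // (additive_on0 sD psiD).
by rewrite mulrn_eq0 => /orP [/eqP m00|/eqP //]; move: m0; rewrite m00.
Qed.

Section Commuting.
Variables (A : zmodType) (f g : A -> A).
Hypotheses (ef : is_endo f) (eg : is_endo g).

Lemma endo_comm_torsion S : is_subgroup S ->
  (forall z, S z -> exists m, (0 < m)%N /\ z *+ m = 0) ->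
  (forall p s t, prime p -> S t -> t *+ p ^ s = 0 -> f (g t) = g (f t)) ->
  forall z, S z -> f (g z) = g (f z).
Proof.
move=> sS torS comm_p z Sz; have [m [m0 hm]] := torS z Sz.
apply: (torsion_primary_ind (Q := fun z => f (g z) = g (f z)) sS _ _ comm_p m0 Sz hm).
  by rewrite !endo0.
by move=> a b _ _ ha hb; rewrite eg ef ha hb -eg -ef.
Qed.

Lemma dsum_primary_comm S C e (P : set nat) (H : nat -> QZ -> Prop) (psi : A -> nat -> QZ) :
  is_subgroup S -> additive_on S psi -> (forall x, S x -> ext_dsum P H (psi x)) ->
  (forall x y, S x -> S y -> psi x = psi y -> x = y) -> set_of_primes P ->
  (forall q, P q -> forall x, H q x -> exists j, x *+ q ^ j = 0) ->
  is_endo e -> (forall a, S (e a)) -> (forall a, C (a - e a)) ->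
  (forall p s c, P p -> C c -> c *+ p ^ s = 0 -> c = 0) ->
  forall p s t, prime p -> S t -> t *+ p ^ s = 0 -> f (g t) = g (f t).
Proof.
move=> sS psiD psiE psiI Pprime Hprim ee eS eC Cfree p s t pp St ht.
apply: (endo_comm_locally_cyclic _ ef eg) => w ann.
have [t0|tn] := pselect (t = 0).
  have := ann 1%N; rewrite t0 mul0rn mulr1n => /(_ erefl) ->.
  by exists 0; rewrite mulr0z.
have Pp : P p.
  by apply: contrapT => nP; exact: tn (iso_primary_eq0 sS psiD psiE psiI Pprime Hprim St pp ht nP).
have Cw : w - e w = 0.
  apply: (Cfree p s) => //.
  by rewrite mulrnBl -(endoMn _ _ ee) (ann _ ht) endo0 // subrr.
have Sw : S w by move/eqP: Cw; rewrite subr_eq0 => /eqP ->.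
exact: (iso_locally_cyclic sS psiD psiE psiI Pprime Hprim St Sw pp ht ann).
Qed.

Lemma rank1_endo_comm D : is_divisible_part D -> sub_isomorphic D (fun _ : rat => True) ->
  forall d, D d -> f (g d) = g (f d).
Proof.
move=> Dp DQ; have [psi [psiD [_ [psiI psiS]]]] := DQ.
have sD : is_subgroup D := Dp.1.1.
have [e [De he]] := psiS 1 I.
have tf := rank1_torsion_free sD DQ.
have rk d : D d -> exists m (j : int), (0 < m)%N /\ d *+ m = e *~ j.
  move=> Dd; exists `|denq (psi d)|%N, (numq (psi d)).
  split; first by rewrite absz_gt0 denq_neq0.
  apply: psiI; [exact: subgroupMn | exact: subgroupMz |].
  rewrite (additive_onMn sD psiD) // (additive_onMz sD psiD) // he.
  rewrite -mulr_natr -[X in _ * X]/((`|denq (psi d)|%N%:Z)%:~R) gtz0_abs ?denq_gt0 //.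
  by rewrite -numqE.
have fD := divisible_part_endo_stable Dp ef; have gD := divisible_part_endo_stable Dp eg.
have DC d : D d -> D (f (g d) - g (f d)).
  by move=> Dd; apply: subgroupB => //; [apply/fD/gD | apply/gD/fD].
have comm_e : f (g e) = g (f e).
  have [m1 [n1 [m10 h1]]] := rk _ (gD _ De).
  have [m2 [n2 [m20 h2]]] := rk _ (fD _ De).
  apply/eqP; rewrite -subr_eq0; apply/eqP; apply: (tf _ (m1 * m2)%N (DC _ De)).
    by rewrite muln_gt0 m10.
  have X1 : f (g e) *+ (m1 * m2) = e *~ n2 *~ n1.
    by rewrite mulrnA -(endoMn _ _ ef) h1 (endoMz _ _ ef) pmulrn mulrzAC -pmulrn h2.
  have X2 : g (f e) *+ (m1 * m2) = e *~ n1 *~ n2.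
    by rewrite mulnC mulrnA -(endoMn _ _ eg) h2 (endoMz _ _ eg) pmulrn mulrzAC -pmulrn h1.
  by rewrite mulrnBl X1 X2 mulrzAC subrr.
move=> d Dd; have [m [j [m0 hd]]] := rk d Dd.
apply/eqP; rewrite -subr_eq0; apply/eqP; apply: (tf _ m (DC _ Dd) m0).
rewrite mulrnBl -(endoMn _ _ ef) -(endoMn _ _ eg) -(endoMn _ _ eg) -(endoMn _ _ ef) hd.
by rewrite !(endoMz _ _ eg) !(endoMz _ _ ef) !(endoMz _ _ eg) comm_e subrr.
Qed.

End Commuting.

Lemma structure_endo_comm (A : zmodType) (D R : A -> Prop) :
  is_divisible_part D -> is_subgroup R -> internal_dsum D R -> summand_structure D R ->
  forall f g : A -> A, is_endo f -> is_endo g -> forall z, f (g z) = g (f z).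
Proof.
move=> Dp sR ds [P' [k [PP' [_ [[psiR [psiRD [psiRE [psiRI _]]]] hD]]]]] f g ef eg.
have [pi [epi piD piR _ _]] := dsum_projection ds.
have sD : is_subgroup D := Dp.1.1.
have HR q : P' q -> forall x, cyclic_QZ (q ^ k q) x -> exists j, x *+ q ^ j = 0.
  by move=> _ x hx; exists (k q).
have [Dfree commD] : (forall p s d, P' p -> D d -> d *+ p ^ s = 0 -> d = 0) /\
    (forall d, D d -> f (g d) = g (f d)).
  case: hD => [DQ | [P'' [PP'' [disj [psiD [psiDD [psiDE [psiDI _]]]]]]]].
    split; last exact: rank1_endo_comm.
    by move=> p s d P'p Dd; apply: (rank1_torsion_free sD DQ Dd); rewrite expn_gt0 prime_gt0 ?PP'.
  have HD q : P'' q -> forall x, prufer_QZ q x -> exists j, x *+ q ^ j = 0 by [].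
  split=> [p s d P'p Dd hd|].
    exact: (iso_primary_eq0 sD psiDD psiDE psiDI PP'' HD Dd (PP' _ P'p) hd (disj p P'p)).
  apply: (endo_comm_torsion ef eg sD (iso_torsion sD psiDD psiDE psiDI)).
  apply: (dsum_primary_comm ef eg sD psiDD psiDE psiDI PP'' HD epi piD piR).
  move=> p s r P''p Rr hr; apply: (iso_primary_eq0 sR psiRD psiRE psiRI PP' HR Rr _ hr).
    exact: PP''.
  by move=> P'p; apply: disj P'p P''p.
have erho : is_endo (fun a => a - pi a) by move=> u v; rewrite epi opprD addrACA.
have rhoD a : D (a - (a - pi a)) by rewrite subKr.
have commR := endo_comm_torsion ef eg sR (iso_torsion sR psiRD psiRE psiRI)
  (dsum_primary_comm ef eg sR psiRD psiRE psiRI PP' HR erho piR rhoD Dfree).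
move=> z; rewrite -(subrKC (pi z) z) eg ef commD // commR //.
by rewrite -eg -ef.
Qed.

Unset Implicit Arguments.

Theorem theorem2p4 (A : zmodType) (D R : A -> Prop) :
  is_divisible_part D -> is_subgroup R -> internal_dsum D R ->
  nonzero_sub D -> nonzero_sub R ->
  (End_centrally_essential A <->
   exists (P' : set nat) (k : nat -> nat),
     set_of_primes P' /\ (forall p, P' p -> (0 < k p)%N) /\
     sub_isomorphic R (ext_dsum P' (fun p => cyclic_QZ (p ^ k p))) /\
     (sub_isomorphic D (fun _ : rat => True) \/
      exists P'' : set nat,
        set_of_primes P'' /\ (forall p, P' p -> ~ P'' p) /\
        sub_isomorphic D (ext_dsum P'' prufer_QZ))).
Proof.
move=> Dp sR ds nzD _; split => [CE | structure].
  have [pi [epi piD piR piDd piRr]] := dsum_projection ds.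
  exact: (CE_summand_structure Dp sR CE nzD epi piD piR piDd piRr).
have [d [_ nd]] := nzD.
apply: End_comm_centrally_essential; first by exists d.
exact: (structure_endo_comm Dp sR ds structure).
Qed.
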